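(* Let $m\in\mathbb{N}_0$ and $n\in\mathbb{N}$, and fix a word pattern of $m$ letters $S$ and $n$ letters $T$ whose last letter is $T$. Then there are integers $c_1,\dots,c_m$, depending only on the pattern and not on $g$, such that for every $g\in\mathcal{H}(\mathbb{D})$ the corresponding $g$-word $L\in W^T_g(m,n)$ satisfies $$L=S_g^mT_g^n+\sum_{j=1}^mc_jS_g^{m-j}T_g^{n+j}.$$
   Context: $\mathcal{H}(\mathbb{D})$ analytic functions on the unit disc. For $g\in\mathcal{H}(\mathbb{D})$: $T_gf(z)=\int_0^zf(\zeta)g'(\zeta)d\zeta$, $S_gf(z)=\int_0^zf'(\zeta)g(\zeta)d\zeta$, with $S_g^0$ the identity. $W^T_g(m,n)$ is the set of products of $m$ factors $S_g$ and $n$ factors $T_g$ (in any order) whose last (rightmost) factor is $T_g$. *)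

From Stdlib Require Import Reals ZArith List ClassicalEpsilon.
From Coquelicot Require Import Coquelicot.
Open Scope R_scope.

Definition in_disc (z : C) : Prop := Cmod z < 1.

Definition cdiff (f : C -> C) (z : C) : Prop :=
  @ex_derive C_AbsRing C_NormedModule f z.

Definition holo_disc (f : C -> C) : Prop := forall z, in_disc z -> cdiff f z.

(* complex derivative f'(z) (chosen by description; default 0 if it does not exist) *)
Definition cderiv (f : C -> C) (z : C) : C :=
  match excluded_middle_informative (cdiff f z) with
  | left H => proj1_sig (constructive_indefinite_description _ H)
  | right _ => RtoC 0
  end.

(* Complex line integral  int_0^z h(zeta) d zeta  along the segment [0, z]:
   z * int_0^1 h(t z) dt, the real integral being taken componentwise. *)
Definition cint0 (h : C -> C) (z : C) : C :=
  Cmult z (RInt (fun t => Re (h (Cmult (RtoC t) z))) 0 1,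
           RInt (fun t => Im (h (Cmult (RtoC t) z))) 0 1).

Definition Tg (g : C -> C) (f : C -> C) : C -> C :=
  cint0 (fun w => Cmult (f w) (cderiv g w)).

Definition Sg (g : C -> C) (f : C -> C) : C -> C :=
  cint0 (fun w => Cmult (cderiv f w) (g w)).

Fixpoint op_pow (A : (C -> C) -> (C -> C)) (k : nat) (f : C -> C) : C -> C :=
  match k with
  | O => f
  | S k' => A (op_pow A k' f)
  end.

(* A word pattern: a list of letters, [true] = T, [false] = S, read left to
   right as an operator product  A_1 A_2 ... A_N  (rightmost factor applied first). *)
Definition word_op (g : C -> C) (w : list bool) (f : C -> C) : C -> C :=
  fold_right (fun (b : bool) (F : C -> C) => if b then Tg g F else Sg g F) f w.

Definition count_T (w : list bool) : nat := count_occ Bool.bool_dec w true.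
Definition count_S (w : list bool) : nat := count_occ Bool.bool_dec w false.

Definition is_WT_pattern (m n : nat) (w : list bool) : Prop :=
  count_S w = m /\ count_T w = n /\ last w false = true.

(* On holomorphic functions vanishing at 0 the two operators satisfy T_g S_g = S_g T_g - T_g^2:
   indeed S_g h = g h - T_g h when h(0) = 0, both sides having derivative h' g and value 0 at 0,
   so T_g S_g h = T_g (g h) - T_g T_g h, and T_g (g h) = S_g T_g h since (T_g h)' = h g'.
   Every S_g h and T_g h vanishes at 0 and the rightmost letter of the word is T_g, so the word can
   be brought to the normal form sum_j c_j S_g^(m-j) T_g^(n+j) by repeatedly replacing T_g S_g with
   S_g T_g - T_g T_g. A replacement keeps the length and lowers the number of S_g's in the second
   term only, so S_g^m T_g^n appears exactly once, with coefficient 1; the integers c_j come from the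
   rewriting alone and do not depend on g.

   The analytic input is that T_g h and S_g h are holomorphic with derivatives h g' and h' g. This
   needs primitives of holomorphic functions on the disc (Goursat's lemma for triangles, allowing one
   vertex where the integrand is merely continuous) and the holomorphy of g' (Cauchy's integral
   formula on circles, differentiated under the integral sign). *)

From Stdlib Require Import Reals ZArith List Lra Lia ClassicalEpsilon FunctionalExtensionality.
From Coquelicot Require Import Coquelicot.
Open Scope R_scope.

Ltac C_expand :=
  unfold RtoC, Ci, Cmult, Cplus, Cminus, Copp; simpl; unfold Cplus, Cmult; simpl; f_equal.

Lemma im_le_Cmod (z : C) : Rabs (Im z) <= Cmod z.
Proof. pose proof (Rmax_Cmod z). destruct z; simpl in *. pose proof (Rmax_r (Rabs r) (Rabs r0)). lra. Qed.

Lemma Cmod_le_Re_Im (z : C) : Cmod z <= Rabs (Re z) + Rabs (Im z).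
Proof.
  replace z with (RtoC (Re z) + RtoC (Im z) * Ci)%C at 1 by (destruct z; C_expand; ring).
  eapply Rle_trans. apply Cmod_triangle.
  rewrite Cmod_mult, !Cmod_R, Cmod_Ci. lra.
Qed.

Lemma Cmod_triangle3 (a b c : C) : Cmod (a + b + c) <= Cmod a + Cmod b + Cmod c.
Proof. eapply Rle_trans. apply Cmod_triangle. pose proof (Cmod_triangle a b). lra. Qed.

Lemma Cmod_minus_le (a b : C) : Cmod (a - b) <= Cmod a + Cmod b.
Proof. eapply Rle_trans. apply Cmod_triangle. rewrite Cmod_opp. lra. Qed.

Lemma Cmod_minus_ge (a b : C) : Cmod a - Cmod b <= Cmod (a - b).
Proof. replace a with (a - b + b)%C at 1 by ring. pose proof (Cmod_triangle (a - b) b). lra. Qed.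

Lemma Cmod_minus_sym (a b : C) : Cmod (a - b) = Cmod (b - a).
Proof. replace (a - b)%C with (- (b - a))%C by ring. apply Cmod_opp. Qed.

Lemma Cmod_scal_le (s : R) (u : C) : 0 <= s <= 1 -> Cmod (RtoC s * u) <= Cmod u.
Proof.
  intros Hs. rewrite Cmod_mult, Cmod_R, Rabs_pos_eq by lra.
  pose proof (Cmod_ge_0 u). nra.
Qed.

Lemma RtoC_IZR_opp1 : RtoC (IZR (-1)) = (- RtoC 1)%C.
Proof. C_expand; lra. Qed.

(** * Complex derivatives *)

(* [C_UniformSpace] uses product balls; these structures use the balls of [Cmod], as the
   eps-delta definitions below do. *)
Local Notation Cmod_space := (AbsRing_UniformSpace C_AbsRing).
Local Notation Cmod_module := (AbsRing_NormedModule C_AbsRing).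

Definition near (z : C) (P : C -> Prop) : Prop :=
  exists del, 0 < del /\ forall w, Cmod (w - z) < del -> P w.

Lemma near_mono z (P Q : C -> Prop) : (forall w, P w -> Q w) -> near z P -> near z Q.
Proof. intros H [d [Hd K]]. exists d. auto. Qed.

Lemma near_locally z P : near z P -> @locally Cmod_space z P.
Proof.
  intros [d [Hd K]]. apply (locally_le_locally_norm (K := C_AbsRing) (V := Cmod_module)).
  exists (mkposreal d Hd). exact K.
Qed.

Lemma continuous_norm_eps {K : AbsRing} {U V : NormedModule K} (f : U -> V) (x : U) :
  continuous f x <-> forall eps : R, 0 < eps -> exists del : R, 0 < del /\
    forall y, norm (minus y x) < del -> norm (minus (f y) (f x)) < eps.
Proof.
  split.
  - intros Hf eps Heps.
    destruct (locally_norm_le_locally x _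
      (proj1 (filterlim_locally_ball_norm f (f x)) Hf (mkposreal eps Heps))) as [d Hd].
    exists d. split; [apply cond_pos | exact Hd].
  - intros H. apply (filterlim_locally_ball_norm f (f x)). intros eps.
    apply locally_le_locally_norm. destruct (H eps (cond_pos eps)) as [d [Hd Hy]].
    exists (mkposreal d Hd). exact Hy.
Qed.

Definition ccont (f : C -> C) (z : C) : Prop :=
  forall eps, 0 < eps -> exists del, 0 < del /\
    forall w, Cmod (w - z) < del -> Cmod (f w - f z) < eps.

Lemma ccont_continuous f z :
  ccont f z <-> @continuous Cmod_space Cmod_space f z.
Proof.
  symmetry. exact (continuous_norm_eps (U := Cmod_module) (V := Cmod_module) f z).
Qed.

Lemma ccont_plus f g z : ccont f z -> ccont g z -> ccont (fun w => f w + g w)%C z.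
Proof. rewrite !ccont_continuous. apply (continuous_plus (U := Cmod_space) (K := C_AbsRing) (V := Cmod_module)). Qed.

Lemma ccont_opp f z : ccont f z -> ccont (fun w => - f w)%C z.
Proof. rewrite !ccont_continuous. apply (continuous_opp (U := Cmod_space) (K := C_AbsRing) (V := Cmod_module)). Qed.

Lemma ccont_minus f g z : ccont f z -> ccont g z -> ccont (fun w => f w - g w)%C z.
Proof. intros Hf Hg. apply ccont_plus; [exact Hf | apply ccont_opp, Hg]. Qed.

Lemma ccont_mult f g z : ccont f z -> ccont g z -> ccont (fun w => f w * g w)%C z.
Proof. rewrite !ccont_continuous. apply (continuous_mult (U := Cmod_space) (K := C_AbsRing)). Qed.

Lemma ccont_const c z : ccont (fun _ => c) z.
Proof. apply ccont_continuous, (continuous_const (U := Cmod_space)). Qed.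

Lemma ccont_id z : ccont (fun w => w) z.
Proof. apply ccont_continuous, (continuous_id (U := Cmod_space)). Qed.

Definition is_cderiv (f : C -> C) (z l : C) : Prop :=
  forall eps, 0 < eps -> exists del, 0 < del /\
    forall w, Cmod (w - z) < del -> Cmod (f w - f z - l * (w - z)) <= eps * Cmod (w - z).

Lemma is_derive_C_NormedModule (f : C -> C) z l :
  @is_derive C_AbsRing C_NormedModule f z l <-> @is_derive C_AbsRing Cmod_module f z l.
Proof.
  split; intros [[Hplus Hscal [M HM]] Hd];
    (split; [split; [exact Hplus | exact Hscal | exists M; exact HM] | exact Hd]).
Qed.

Lemma is_cderiv_is_derive (f : C -> C) z l :
  is_cderiv f z l <-> @is_derive C_AbsRing Cmod_module f z l.
Proof.
  assert (E : forall w, (f w - f z - l * (w - z))%C = minus (minus (f w) (f z)) (scal (minus w z) l)).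
  { intros w. unfold minus, plus, opp, scal; simpl. change mult with Cmult. ring. }
  split.
  - intros H. split; [apply is_linear_scal_l|].
    intros x Hx. apply (is_filter_lim_locally_unique (K := C_AbsRing) (V := Cmod_module)) in Hx.
    subst x. intros eps. apply (locally_norm_le_locally (K := C_AbsRing) (V := Cmod_module)).
    destruct (H eps (cond_pos eps)) as [d [Hd Hw]].
    exists (mkposreal d Hd). intros y Hy. specialize (Hw y Hy). rewrite E in Hw. exact Hw.
  - intros [_ Hd] eps Heps.
    destruct (locally_le_locally_norm (K := C_AbsRing) (V := Cmod_module) z _
      (Hd z (fun P HP => HP) (mkposreal eps Heps))) as [d Hw].
    exists d. split; [apply cond_pos|]. intros w Hwz. rewrite E. exact (Hw w Hwz).
Qed.

Lemma cdiff_is_cderiv f z : cdiff f z <-> exists l, is_cderiv f z l.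
Proof.
  unfold cdiff, ex_derive. split; intros [l Hl]; exists l.
  - apply is_cderiv_is_derive, is_derive_C_NormedModule, Hl.
  - apply is_derive_C_NormedModule, is_cderiv_is_derive, Hl.
Qed.

Lemma is_cderiv_unique f z l l' : is_cderiv f z l -> is_cderiv f z l' -> l = l'.
Proof.
  intros H1 H2. apply (proj2 (Ceq_minus l l')). apply Cmod_eq_0.
  apply Rle_antisym; [|apply Cmod_ge_0]. apply Rnot_lt_le. intros Hpos.
  set (e := Cmod (l - l') / 4).
  destruct (H1 e ltac:(unfold e; lra)) as [d1 [Hd1 K1]].
  destruct (H2 e ltac:(unfold e; lra)) as [d2 [Hd2 K2]].
  set (h := Rmin d1 d2 / 2).
  assert (Hh : 0 < h) by (unfold h; pose proof (Rmin_glb_lt d1 d2 0 Hd1 Hd2); lra).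
  pose proof (Rmin_l d1 d2). pose proof (Rmin_r d1 d2).
  assert (Hw : Cmod (z + RtoC h - z) = h).
  { replace (z + h - z)%C with (RtoC h) by ring. rewrite Cmod_R. apply Rabs_pos_eq. lra. }
  specialize (K1 (z + RtoC h)%C). specialize (K2 (z + RtoC h)%C). rewrite Hw in K1, K2.
  specialize (K1 ltac:(unfold h in *; lra)). specialize (K2 ltac:(unfold h in *; lra)).
  assert (Cmod ((l - l') * (z + RtoC h - z)) <= 2 * e * h).
  { set (w := (z + RtoC h)%C) in *.
    replace ((l - l') * (w - z))%C with ((f w - f z - l' * (w - z)) - (f w - f z - l * (w - z)))%C by ring.
    eapply Rle_trans. apply Cmod_minus_le. lra. }
  rewrite Cmod_mult, Hw in H3. unfold e in H3. nra.
Qed.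

Lemma cderiv_is_cderiv f z l : is_cderiv f z l -> cderiv f z = l.
Proof.
  intros H. unfold cderiv. destruct excluded_middle_informative as [Hc|Hc].
  - destruct constructive_indefinite_description as [l' Hl']. simpl.
    eapply is_cderiv_unique; [apply is_cderiv_is_derive, is_derive_C_NormedModule, Hl' | exact H].
  - exfalso. apply Hc, cdiff_is_cderiv. eauto.
Qed.

Lemma is_cderiv_cont f z l : is_cderiv f z l -> ccont f z.
Proof.
  intros H eps Heps. pose proof (Cmod_ge_0 l).
  destruct (H 1 Rlt_0_1) as [d [Hd K]].
  exists (Rmin d (eps / (Cmod l + 1))). split.
  { apply Rmin_glb_lt; [exact Hd | apply Rdiv_lt_0_compat; lra]. }
  intros w Hw. pose proof (Rmin_l d (eps / (Cmod l + 1))). pose proof (Rmin_r d (eps / (Cmod l + 1))).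
  specialize (K w ltac:(lra)).
  replace (f w - f z)%C with ((f w - f z - l * (w - z)) + l * (w - z))%C by ring.
  eapply Rle_lt_trans; [apply Cmod_triangle|]. rewrite Cmod_mult.
  apply Rle_lt_trans with ((Cmod l + 1) * Cmod (w - z)); [lra|].
  apply Rmult_lt_reg_r with (/ (Cmod l + 1)); [apply Rinv_0_lt_compat; lra|].
  replace ((Cmod l + 1) * Cmod (w - z) * / (Cmod l + 1)) with (Cmod (w - z)) by (field; lra).
  unfold Rdiv in *. lra.
Qed.

Lemma is_cderiv_ext_near f g z l : near z (fun w => f w = g w) -> is_cderiv f z l -> is_cderiv g z l.
Proof.
  intros Hn. rewrite !is_cderiv_is_derive. apply is_derive_ext_loc. apply near_locally, Hn.
Qed.

Lemma is_cderiv_plus f g z lf lg :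
  is_cderiv f z lf -> is_cderiv g z lg -> is_cderiv (fun w => f w + g w)%C z (lf + lg)%C.
Proof. rewrite !is_cderiv_is_derive. apply (is_derive_plus (K := C_AbsRing) (V := Cmod_module)). Qed.

Lemma is_cderiv_opp f z l : is_cderiv f z l -> is_cderiv (fun w => - f w)%C z (- l)%C.
Proof. rewrite !is_cderiv_is_derive. apply (is_derive_opp (K := C_AbsRing) (V := Cmod_module)). Qed.

Lemma is_cderiv_minus f g z lf lg :
  is_cderiv f z lf -> is_cderiv g z lg -> is_cderiv (fun w => f w - g w)%C z (lf - lg)%C.
Proof. intros Hf Hg. apply is_cderiv_plus; [exact Hf | apply is_cderiv_opp, Hg]. Qed.

Lemma is_cderiv_mult f g z lf lg :
  is_cderiv f z lf -> is_cderiv g z lg ->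
  is_cderiv (fun w => f w * g w)%C z (lf * g z + f z * lg)%C.
Proof.
  rewrite !is_cderiv_is_derive. intros Hf Hg.
  apply (is_derive_mult (K := C_AbsRing)); [exact Hf | exact Hg | apply Cmult_comm].
Qed.

Lemma is_cderiv_const c z : is_cderiv (fun _ => c) z 0.
Proof. apply is_cderiv_is_derive, (is_derive_const (K := C_AbsRing) (V := Cmod_module)). Qed.

Lemma is_cderiv_id z : is_cderiv (fun w => w) z 1.
Proof. apply is_cderiv_is_derive, (is_derive_id (K := C_AbsRing)). Qed.

Lemma is_cderiv_scal c f z l : is_cderiv f z l -> is_cderiv (fun w => c * f w)%C z (c * l)%C.
Proof.
  intros H. replace (c * l)%C with (0 * f z + c * l)%C by ring.
  apply (is_cderiv_mult (fun _ => c)); [apply is_cderiv_const | exact H].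
Qed.

Lemma is_cderiv_inv (p w0 : C) :
  w0 <> p -> is_cderiv (fun w => / (w - p))%C w0 (- / ((w0 - p) * (w0 - p)))%C.
Proof.
  intros Hne. set (a := (w0 - p)%C).
  assert (Ha : a <> RtoC 0) by (intro E; apply Hne, Ceq_minus, E).
  assert (Hma : 0 < Cmod a) by (apply Cmod_gt_0, Ha).
  intros eps He.
  exists (Rmin (Cmod a / 2) (eps * (Cmod a * Cmod a * Cmod a) / 2)). split.
  { apply Rmin_glb_lt; [lra|]. apply Rdiv_lt_0_compat; [|lra]. repeat apply Rmult_lt_0_compat; lra. }
  intros w Hw.
  pose proof (Rmin_l (Cmod a / 2) (eps * (Cmod a * Cmod a * Cmod a) / 2)) as M1.
  pose proof (Rmin_r (Cmod a / 2) (eps * (Cmod a * Cmod a * Cmod a) / 2)) as M2.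
  set (x := (w - w0)%C) in *.
  assert (Hax : Cmod a / 2 <= Cmod (a + x)).
  { pose proof (Cmod_minus_ge a (- x)). rewrite Cmod_opp in H.
    replace (a - - x)%C with (a + x)%C in H by ring. lra. }
  assert (Hax0 : (a + x)%C <> RtoC 0) by (intro E; rewrite E, Cmod_0 in Hax; lra).
  replace (w - p)%C with (a + x)%C by (unfold a, x; ring). fold a.
  replace (/ (a + x) - / a - - / (a * a) * x)%C with (x * x * / (a * a * (a + x)))%C
    by (field; split; auto).
  rewrite Cmod_mult, Cmod_inv by (repeat apply Cmult_neq_0; auto). rewrite !Cmod_mult.
  pose proof (Cmod_ge_0 x).
  apply Rle_trans with (Cmod x * Cmod x * / (Cmod a * Cmod a * (Cmod a / 2))).
  - apply Rmult_le_compat_l; [nra|]. apply Rinv_le_contravar; [repeat apply Rmult_lt_0_compat; lra|].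
    apply Rmult_le_compat_l; [nra | exact Hax].
  - replace (Cmod x * Cmod x * / (Cmod a * Cmod a * (Cmod a / 2)))
      with (Cmod x * (2 * Cmod x / (Cmod a * Cmod a * Cmod a))) by (field; lra).
    rewrite (Rmult_comm eps (Cmod x)). apply Rmult_le_compat_l; [exact H|].
    apply Rmult_le_reg_r with (Cmod a * Cmod a * Cmod a); [repeat apply Rmult_lt_0_compat; lra|].
    unfold Rdiv. rewrite Rmult_assoc, Rinv_l by (apply Rgt_not_eq; repeat apply Rmult_lt_0_compat; lra).
    lra.
Qed.

(** * Curves and their integrals *)

Definition rcont (f : R -> C) (t : R) : Prop :=
  forall eps, 0 < eps -> exists del, 0 < del /\
    forall s, Rabs (s - t) < del -> Cmod (f s - f t) < eps.

Definition rcont_on (f : R -> C) (a b : R) : Prop :=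
  forall t, Rmin a b <= t <= Rmax a b -> rcont f t.

Lemma rcont_proj (p : C -> R) f t :
  (forall z, Rabs (p z) <= Cmod z) -> (forall z w, p (z - w)%C = p z - p w) ->
  rcont f t -> continuous (fun s => p (f s)) t.
Proof.
  intros Hp Hlin H. apply continuity_pt_filterlim. intros eps He.
  destruct (H eps He) as [d [Hd K]]. exists d. split; [exact Hd|].
  intros s [_ Hs]. simpl in *. unfold R_dist in *. rewrite <- Hlin.
  eapply Rle_lt_trans; [apply Hp | exact (K s Hs)].
Qed.

Lemma rcont_Re f t : rcont f t -> continuous (fun s => Re (f s)) t.
Proof. apply rcont_proj; [apply re_le_Cmod | intros [] []; simpl; ring]. Qed.

Lemma rcont_Im f t : rcont f t -> continuous (fun s => Im (f s)) t.
Proof. apply rcont_proj; [apply im_le_Cmod | intros [] []; simpl; ring]. Qed.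

Lemma rcont_on_ex_RInt f a b :
  rcont_on f a b -> ex_RInt (fun t => Re (f t)) a b /\ ex_RInt (fun t => Im (f t)) a b.
Proof.
  intros H. split; apply (ex_RInt_continuous (V := R_CompleteNormedModule)); intros z Hz;
    [apply rcont_Re | apply rcont_Im]; apply H, Hz.
Qed.

Lemma rcont_plus f g t : rcont f t -> rcont g t -> rcont (fun s => f s + g s)%C t.
Proof.
  intros Hf Hg eps He.
  destruct (Hf (eps / 2)) as [d1 [Hd1 K1]]; [lra|]. destruct (Hg (eps / 2)) as [d2 [Hd2 K2]]; [lra|].
  exists (Rmin d1 d2). split; [apply Rmin_glb_lt; lra|]. intros s Hs.
  pose proof (Rmin_l d1 d2). pose proof (Rmin_r d1 d2).
  replace (f s + g s - (f t + g t))%C with ((f s - f t) + (g s - g t))%C by ring.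
  eapply Rle_lt_trans; [apply Cmod_triangle|].
  specialize (K1 s ltac:(lra)). specialize (K2 s ltac:(lra)). lra.
Qed.

Lemma rcont_opp f t : rcont f t -> rcont (fun s => - f s)%C t.
Proof.
  intros H eps He. destruct (H eps He) as [d [Hd K]]. exists d. split; [exact Hd|]. intros s Hs.
  replace (- f s - - f t)%C with (- (f s - f t))%C by ring. rewrite Cmod_opp. auto.
Qed.

Lemma rcont_minus f g t : rcont f t -> rcont g t -> rcont (fun s => f s - g s)%C t.
Proof. intros Hf Hg. apply rcont_plus; [exact Hf | apply rcont_opp, Hg]. Qed.

Lemma rcont_comp (k : C -> C) (g : R -> C) t : rcont g t -> ccont k (g t) -> rcont (fun s => k (g s)) t.
Proof.
  intros Hg Hk eps He. destruct (Hk eps He) as [d1 [Hd1 K1]]. destruct (Hg d1 Hd1) as [d2 [Hd2 K2]].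
  exists d2. split; [exact Hd2|]. intros s Hs. apply K1, K2, Hs.
Qed.

Lemma rcont_const c t : rcont (fun _ => c) t.
Proof.
  intros eps He. exists 1. split; [lra|]. intros.
  replace (c - c)%C with (RtoC 0) by ring. rewrite Cmod_0. lra.
Qed.

Lemma ccont_Re_comp f t : rcont f t -> ccont (fun w => f (Re w)) (RtoC t).
Proof.
  intros Hf eps He. destruct (Hf eps He) as [d [Hd K]]. exists d. split; [exact Hd|].
  intros w Hw. apply K. eapply Rle_lt_trans; [|exact Hw].
  replace (Re w - t) with (Re (w - RtoC t)) by (destruct w; simpl; ring). apply re_le_Cmod.
Qed.

(* Products go through the extension [w |-> f (Re w)] of a curve to C, where [ccont_mult] applies. *)
Lemma rcont_mult f g t : rcont f t -> rcont g t -> rcont (fun s => f s * g s)%C t.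
Proof.
  intros Hf Hg eps He.
  destruct (ccont_mult _ _ _ (ccont_Re_comp f t Hf) (ccont_Re_comp g t Hg) eps He) as [d [Hd K]].
  exists d. split; [exact Hd|]. intros s Hs. apply (K (RtoC s)).
  rewrite <- RtoC_minus, Cmod_R. exact Hs.
Qed.

Lemma rcont_affine k (a d : C) s : ccont k (a + RtoC s * d)%C -> rcont (fun t => k (a + RtoC t * d)%C) s.
Proof.
  intros H eps He. destruct (H eps He) as [del [Hdel K]]. pose proof (Cmod_ge_0 d).
  exists (del / (Cmod d + 1)). split; [apply Rdiv_lt_0_compat; lra|].
  intros t Ht. apply K.
  replace (a + RtoC t * d - (a + RtoC s * d))%C with (RtoC (t - s) * d)%C by (rewrite RtoC_minus; ring).
  rewrite Cmod_mult, Cmod_R.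
  apply Rle_lt_trans with (Rabs (t - s) * (Cmod d + 1)); [apply Rmult_le_compat_l; [apply Rabs_pos | lra]|].
  apply Rmult_lt_reg_r with (/ (Cmod d + 1)); [apply Rinv_0_lt_compat; lra|].
  replace (Rabs (t - s) * (Cmod d + 1) * / (Cmod d + 1)) with (Rabs (t - s)) by (field; lra). exact Ht.
Qed.

Lemma rcont_lin (G : R -> C) (u v t : R) : rcont G (u * t + v) -> rcont (fun y => G (u * y + v)) t.
Proof.
  intros H eps He. destruct (H eps He) as [del [Hdel K]]. pose proof (Rabs_pos u).
  exists (del / (Rabs u + 1)). split; [apply Rdiv_lt_0_compat; lra|].
  intros s Hs. apply K. replace (u * s + v - (u * t + v)) with (u * (s - t)) by ring.
  rewrite Rabs_mult. pose proof (Rabs_pos (s - t)).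
  apply Rle_lt_trans with ((Rabs u + 1) * Rabs (s - t)); [nra|].
  apply Rmult_lt_reg_r with (/ (Rabs u + 1)); [apply Rinv_0_lt_compat; lra|].
  replace ((Rabs u + 1) * Rabs (s - t) * / (Rabs u + 1)) with (Rabs (s - t)) by (field; lra). exact Hs.
Qed.

Lemma rcont_on_bounded w a b : a <= b -> rcont_on w a b -> exists M, forall t, a <= t <= b -> Cmod (w t) <= M.
Proof.
  intros Hab H.
  destruct (continuity_ab_maj (fun t => Cmod (w t)) a b Hab) as [x [Hx _]].
  - intros c0 Hc0. assert (Hr : rcont w c0) by (apply H; rewrite Rmin_left, Rmax_right; lra).
    intros eps He. destruct (Hr eps He) as [d [Hd K]]. exists d. split; [exact Hd|].
    intros y [_ Hy]. simpl in *. unfold R_dist in *. specialize (K y Hy). apply Rabs_def1.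
    + pose proof (Cmod_minus_ge (w y) (w c0)). lra.
    + pose proof (Cmod_minus_ge (w c0) (w y)). rewrite Cmod_minus_sym in H0. lra.
  - exists (Cmod (w x)). exact Hx.
Qed.

Definition is_rderiv (F : R -> C) (t : R) (l : C) : Prop :=
  forall eps, 0 < eps -> exists del, 0 < del /\
    forall h, Rabs h < del -> Cmod (F (t + h)%R - F t - RtoC h * l) <= eps * Rabs h.

Lemma is_rderiv_proj (p : C -> R) F t l :
  (forall z, Rabs (p z) <= Cmod z) -> (forall z w (h : R), p (z - w - RtoC h * l)%C = p z - p w - h * p l) ->
  is_rderiv F t l -> is_derive (fun s => p (F s)) t (p l).
Proof.
  intros Hp Hlin H. apply is_derive_Reals. intros eps He.
  destruct (H (eps / 2)) as [d [Hd K]]; [lra|].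
  exists (mkposreal d Hd). intros h Hh0 Hh. simpl in Hh. specialize (K h Hh).
  assert (A : Rabs (p (F (t + h)) - p (F t) - h * p l) <= eps / 2 * Rabs h).
  { rewrite <- Hlin. eapply Rle_trans; [apply Hp | exact K]. }
  replace ((p (F (t + h)) - p (F t)) / h - p l) with ((p (F (t + h)) - p (F t) - h * p l) / h) by (field; auto).
  assert (0 < Rabs h) by (apply Rabs_pos_lt; auto).
  unfold Rdiv. rewrite Rabs_mult, Rabs_inv.
  apply Rmult_le_compat_r with (r := / Rabs h) in A; [|left; apply Rinv_0_lt_compat; auto].
  replace (eps / 2 * Rabs h * / Rabs h) with (eps / 2) in A by (field; lra). lra.
Qed.

Lemma is_rderiv_Re F t l : is_rderiv F t l -> is_derive (fun s => Re (F s)) t (Re l).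
Proof. apply is_rderiv_proj; [apply re_le_Cmod | intros [] [] h; destruct l; simpl; ring]. Qed.

Lemma is_rderiv_Im F t l : is_rderiv F t l -> is_derive (fun s => Im (F s)) t (Im l).
Proof. apply is_rderiv_proj; [apply im_le_Cmod | intros [] [] h; destruct l; simpl; ring]. Qed.

Lemma is_rderiv_of_Re_Im F t l :
  derivable_pt_lim (fun s => Re (F s)) t (Re l) -> derivable_pt_lim (fun s => Im (F s)) t (Im l) ->
  is_rderiv F t l.
Proof.
  intros H1 H2 eps He.
  destruct (H1 (eps / 2) ltac:(lra)) as [d1 K1]. destruct (H2 (eps / 2) ltac:(lra)) as [d2 K2].
  exists (Rmin d1 d2). split; [apply Rmin_glb_lt; apply cond_pos|]. intros h Hh.
  pose proof (Rmin_l d1 d2). pose proof (Rmin_r d1 d2).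
  destruct (Req_dec h 0) as [E|E].
  { subst h. rewrite Rplus_0_r. replace (F t - F t - RtoC 0 * l)%C with (RtoC 0) by ring.
    rewrite Cmod_0, Rabs_R0. lra. }
  assert (B : forall (f : R -> R) (m : R), Rabs ((f (t + h) - f t) / h - m) < eps / 2 ->
            Rabs (f (t + h) - f t - h * m) <= eps / 2 * Rabs h).
  { intros f m Hf. replace (f (t + h) - f t - h * m) with (((f (t + h) - f t) / h - m) * h) by (field; auto).
    rewrite Rabs_mult. apply Rmult_le_compat_r; [apply Rabs_pos | lra]. }
  pose proof (B (fun s => Re (F s)) _ (K1 h E ltac:(lra))) as BRe.
  pose proof (B (fun s => Im (F s)) _ (K2 h E ltac:(lra))) as BIm.
  eapply Rle_trans; [apply Cmod_le_Re_Im|].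
  replace (Re (F (t + h)%R - F t - RtoC h * l)%C) with (Re (F (t + h)) - Re (F t) - h * Re l)
    by (destruct (F (t + h)), (F t), l; simpl; ring).
  replace (Im (F (t + h)%R - F t - RtoC h * l)%C) with (Im (F (t + h)) - Im (F t) - h * Im l)
    by (destruct (F (t + h)), (F t), l; simpl; ring).
  lra.
Qed.

Lemma is_rderiv_lipschitz F t l :
  is_rderiv F t l -> exists d, 0 < d /\ forall h, Rabs h < d -> Cmod (F (t + h)%R - F t) <= (Cmod l + 1) * Rabs h.
Proof.
  intros H. destruct (H 1 ltac:(lra)) as [d [Hd K]]. exists d. split; [exact Hd|]. intros h Hh.
  specialize (K h Hh). replace (F (t + h)%R - F t)%C with ((F (t + h)%R - F t - RtoC h * l) + RtoC h * l)%C by ring.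
  eapply Rle_trans; [apply Cmod_triangle|]. rewrite Cmod_mult, Cmod_R. lra.
Qed.

Lemma is_rderiv_rcont F t l : is_rderiv F t l -> rcont F t.
Proof.
  intros H eps He. destruct (is_rderiv_lipschitz F t l H) as [d [Hd K]]. pose proof (Cmod_ge_0 l).
  exists (Rmin d (eps / (Cmod l + 2))). split; [apply Rmin_glb_lt; [exact Hd | apply Rdiv_lt_0_compat; lra]|].
  intros s Hs. specialize (K (s - t)). replace (t + (s - t)) with s in K by ring.
  pose proof (Rmin_l d (eps / (Cmod l + 2))). pose proof (Rmin_r d (eps / (Cmod l + 2))).
  eapply Rle_lt_trans; [apply K; lra|].
  apply Rle_lt_trans with ((Cmod l + 2) * Rabs (s - t)); [pose proof (Rabs_pos (s - t)); nra|].
  apply Rmult_lt_reg_r with (/ (Cmod l + 2)); [apply Rinv_0_lt_compat; lra|].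
  replace ((Cmod l + 2) * Rabs (s - t) * / (Cmod l + 2)) with (Rabs (s - t)) by (field; lra).
  unfold Rdiv in *. lra.
Qed.

Lemma is_rderiv_comp (Phi : C -> C) (g : R -> C) t L dg :
  is_cderiv Phi (g t) L -> is_rderiv g t dg -> is_rderiv (fun s => Phi (g s)) t (L * dg)%C.
Proof.
  intros HP Hg eps He.
  pose proof (Cmod_ge_0 L). pose proof (Cmod_ge_0 dg).
  destruct (is_rderiv_lipschitz g t dg Hg) as [d1 [Hd1 K1]].
  set (e1 := eps / 2 / (Cmod dg + 1)).
  destruct (HP e1 ltac:(unfold e1; apply Rdiv_lt_0_compat; lra)) as [d2 [Hd2 K2]].
  set (e2 := eps / 2 / (Cmod L + 1)).
  destruct (Hg e2 ltac:(unfold e2; apply Rdiv_lt_0_compat; lra)) as [d3 [Hd3 K3]].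
  set (d := Rmin d1 (Rmin (d2 / (Cmod dg + 1)) d3)).
  exists d. split.
  { unfold d. repeat apply Rmin_glb_lt; try assumption. apply Rdiv_lt_0_compat; lra. }
  intros h Hh.
  pose proof (Rmin_l d1 (Rmin (d2 / (Cmod dg + 1)) d3)). pose proof (Rmin_r d1 (Rmin (d2 / (Cmod dg + 1)) d3)).
  pose proof (Rmin_l (d2 / (Cmod dg + 1)) d3). pose proof (Rmin_r (d2 / (Cmod dg + 1)) d3).
  fold d in H1, H2. specialize (K1 h ltac:(lra)). specialize (K3 h ltac:(lra)).
  pose proof (Rabs_pos h).
  assert (Hgd : Cmod (g (t + h)%R - g t) < d2).
  { eapply Rle_lt_trans; [exact K1|].
    apply Rmult_lt_reg_r with (/ (Cmod dg + 1)); [apply Rinv_0_lt_compat; lra|].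
    replace ((Cmod dg + 1) * Rabs h * / (Cmod dg + 1)) with (Rabs h) by (field; lra). unfold Rdiv in *. lra. }
  specialize (K2 (g (t + h)%R) Hgd).
  replace (Phi (g (t + h)%R) - Phi (g t) - RtoC h * (L * dg))%C with
    ((Phi (g (t + h)%R) - Phi (g t) - L * (g (t + h)%R - g t)) + L * (g (t + h)%R - g t - RtoC h * dg))%C by ring.
  eapply Rle_trans; [apply Cmod_triangle|]. rewrite Cmod_mult.
  assert (A1 : e1 * Cmod (g (t + h)%R - g t) <= eps / 2 * Rabs h).
  { apply Rle_trans with (e1 * ((Cmod dg + 1) * Rabs h)).
    - apply Rmult_le_compat_l; [unfold e1; apply Rdiv_le_0_compat; lra | exact K1].
    - unfold e1. right. field. lra. }
  assert (A2 : Cmod L * Cmod (g (t + h)%R - g t - RtoC h * dg) <= eps / 2 * Rabs h).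
  { apply Rle_trans with (Cmod L * (e2 * Rabs h)); [apply Rmult_le_compat_l; lra|].
    assert (Cmod L * e2 <= eps / 2).
    { unfold e2. apply Rmult_le_reg_r with (Cmod L + 1); [lra|]. field_simplify; nra. }
    nra. }
  lra.
Qed.

Lemma is_rderiv_affine (c d : C) t : is_rderiv (fun s => (c + RtoC s * d)%C) t d.
Proof.
  intros eps He. exists 1. split; [lra|]. intros h Hh.
  replace (c + RtoC (t + h) * d - (c + RtoC t * d) - RtoC h * d)%C with (RtoC 0) by (rewrite RtoC_plus; ring).
  rewrite Cmod_0. pose proof (Rabs_pos h). nra.
Qed.

Definition CRInt (f : R -> C) (a b : R) : C :=
  (RInt (fun t => Re (f t)) a b, RInt (fun t => Im (f t)) a b).

Lemma CRInt_ext f g a b : (forall t, Rmin a b <= t <= Rmax a b -> f t = g t) -> CRInt f a b = CRInt g a b.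
Proof. intros H. unfold CRInt. f_equal; apply RInt_ext; intros x Hx; rewrite H; auto; lra. Qed.

Lemma CRInt_plus f g a b :
  rcont_on f a b -> rcont_on g a b -> CRInt (fun t => f t + g t)%C a b = (CRInt f a b + CRInt g a b)%C.
Proof.
  intros Hf Hg. destruct (rcont_on_ex_RInt f a b Hf), (rcont_on_ex_RInt g a b Hg).
  unfold CRInt, Cplus. simpl. f_equal; apply (RInt_plus (V := R_CompleteNormedModule)); assumption.
Qed.

Lemma CRInt_scal (c : C) f a b : rcont_on f a b -> CRInt (fun t => c * f t)%C a b = (c * CRInt f a b)%C.
Proof.
  intros Hf. destruct (rcont_on_ex_RInt f a b Hf) as [HRe HIm].
  apply (RInt_correct (V := R_CompleteNormedModule)) in HRe, HIm.
  unfold CRInt, Cmult. destruct c as [cr ci]. simpl. f_equal; apply is_RInt_unique.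
  - apply (is_RInt_ext (fun t => cr * Re (f t) - ci * Im (f t))); [intros x _; destruct (f x); simpl; ring|].
    apply (is_RInt_minus (V := R_CompleteNormedModule));
      apply (is_RInt_scal (V := R_CompleteNormedModule)); assumption.
  - apply (is_RInt_ext (fun t => cr * Im (f t) + ci * Re (f t))); [intros x _; destruct (f x); simpl; ring|].
    apply (is_RInt_plus (V := R_CompleteNormedModule));
      apply (is_RInt_scal (V := R_CompleteNormedModule)); assumption.
Qed.

Lemma CRInt_opp f a b : rcont_on f a b -> CRInt (fun t => - f t)%C a b = (- CRInt f a b)%C.
Proof.
  intros H. rewrite (CRInt_ext _ (fun t => - RtoC 1 * f t)%C) by (intros; ring).
  rewrite CRInt_scal by exact H. ring.
Qed.

Lemma CRInt_minus f g a b :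
  rcont_on f a b -> rcont_on g a b -> CRInt (fun t => f t - g t)%C a b = (CRInt f a b - CRInt g a b)%C.
Proof.
  intros Hf Hg. unfold Cminus at 1. rewrite CRInt_plus, CRInt_opp; auto.
  intros t Ht. apply rcont_opp, Hg, Ht.
Qed.

Lemma CRInt_Chasles f a b c :
  rcont_on f a b -> rcont_on f b c -> (CRInt f a b + CRInt f b c)%C = CRInt f a c.
Proof.
  intros H1 H2. destruct (rcont_on_ex_RInt f a b H1), (rcont_on_ex_RInt f b c H2).
  unfold CRInt, Cplus. simpl. f_equal; apply (RInt_Chasles (V := R_CompleteNormedModule)); assumption.
Qed.

Lemma CRInt_swap f a b : rcont_on f a b -> CRInt f b a = (- CRInt f a b)%C.
Proof.
  intros H. destruct (rcont_on_ex_RInt f a b H).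
  unfold CRInt, Copp. simpl. f_equal; symmetry; apply (opp_RInt_swap (V := R_CompleteNormedModule)); assumption.
Qed.

Lemma CRInt_const c a b : CRInt (fun _ => c) a b = (c * RtoC (b - a))%C.
Proof.
  unfold CRInt. rewrite !(RInt_const (V := R_CompleteNormedModule)).
  destruct c. unfold Cmult, RtoC, scal; simpl. unfold mult; simpl. f_equal; ring.
Qed.

Lemma CRInt_comp_lin f (u v a b : R) : rcont_on f (u * a + v) (u * b + v) ->
  CRInt (fun y => RtoC u * f (u * y + v)%R)%C a b = CRInt f (u * a + v) (u * b + v).
Proof.
  intros H. destruct (rcont_on_ex_RInt _ _ _ H). unfold CRInt. f_equal.
  - rewrite <- (RInt_comp_lin (V := R_CompleteNormedModule) (fun t => Re (f t))) by assumption.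
    apply (RInt_ext (V := R_CompleteNormedModule)). intros x _.
    destruct (f (u * x + v)). unfold scal. simpl. unfold mult. simpl. ring.
  - rewrite <- (RInt_comp_lin (V := R_CompleteNormedModule) (fun t => Im (f t))) by assumption.
    apply (RInt_ext (V := R_CompleteNormedModule)). intros x _.
    destruct (f (u * x + v)). unfold scal. simpl. unfold mult. simpl. ring.
Qed.

(* The factor 2 comes from bounding real and imaginary parts separately. *)
Lemma CRInt_bound f a b M : a <= b -> rcont_on f a b -> (forall t, a <= t <= b -> Cmod (f t) <= M) ->
  Cmod (CRInt f a b) <= 2 * (b - a) * M.
Proof.
  intros Hab Hc HM. destruct (rcont_on_ex_RInt f a b Hc) as [HRe HIm].
  assert (B1 : Rabs (RInt (fun t => Re (f t)) a b) <= (b - a) * M).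
  { apply abs_RInt_le_const; [exact Hab | exact HRe|]. intros t Ht.
    eapply Rle_trans; [apply re_le_Cmod | apply HM; lra]. }
  assert (B2 : Rabs (RInt (fun t => Im (f t)) a b) <= (b - a) * M).
  { apply abs_RInt_le_const; [exact Hab | exact HIm|]. intros t Ht.
    eapply Rle_trans; [apply im_le_Cmod | apply HM; lra]. }
  eapply Rle_trans; [apply Cmod_le_Re_Im|]. unfold CRInt. simpl. lra.
Qed.

Lemma CRInt_FTC F f a b :
  (forall t, Rmin a b <= t <= Rmax a b -> is_rderiv F t (f t)) -> rcont_on f a b ->
  CRInt f a b = (F b - F a)%C.
Proof.
  intros HD Hc. unfold CRInt.
  rewrite (is_RInt_unique (fun t => Re (f t)) a b (Re (F b) - Re (F a))),
          (is_RInt_unique (fun t => Im (f t)) a b (Im (F b) - Im (F a))).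
  - destruct (F b), (F a). unfold Cminus, Cplus, Copp. simpl. f_equal; ring.
  - apply (is_RInt_derive (V := R_CompleteNormedModule) (fun s => Im (F s))).
    + intros x Hx. apply is_rderiv_Im, HD, Hx.
    + intros x Hx. apply rcont_Im, Hc, Hx.
  - apply (is_RInt_derive (V := R_CompleteNormedModule) (fun s => Re (F s))).
    + intros x Hx. apply is_rderiv_Re, HD, Hx.
    + intros x Hx. apply rcont_Re, Hc, Hx.
Qed.

(** * Integrals over segments and triangles *)

Definition seg_int (k : C -> C) (a b : C) : C :=
  ((b - a) * CRInt (fun t => k (a + RtoC t * (b - a))%C) 0 1)%C.

Definition seg_cont (k : C -> C) (a b : C) : Prop :=
  forall s, 0 <= s <= 1 -> ccont k (a + RtoC s * (b - a))%C.

Lemma seg_cont_rcont_on k a b : seg_cont k a b -> rcont_on (fun t => k (a + RtoC t * (b - a))%C) 0 1.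
Proof. intros H t Ht. rewrite Rmin_left, Rmax_right in Ht by lra. apply rcont_affine, H, Ht. Qed.

Lemma seg_int_reparam k (a d : C) (al be : R) x y :
  x = (a + RtoC al * d)%C -> y = (a + RtoC be * d)%C ->
  (forall s, Rmin al be <= s <= Rmax al be -> ccont k (a + RtoC s * d)%C) ->
  seg_int k x y = (d * CRInt (fun s => k (a + RtoC s * d)%C) al be)%C.
Proof.
  intros Hx Hy Hc. unfold seg_int. subst x y.
  set (G := fun s : R => k (a + RtoC s * d)%C).
  assert (HG : rcont_on G al be) by (intros s Hs; apply rcont_affine, Hc, Hs).
  rewrite (CRInt_ext _ (fun t => G ((be - al) * t + al)%R))
    by (intros t _; unfold G; f_equal; rewrite RtoC_plus, RtoC_mult, RtoC_minus; ring).
  assert (HG' : rcont_on (fun t => G ((be - al) * t + al)%R) 0 1).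
  { intros t Ht. apply rcont_lin, HG. rewrite Rmin_left, Rmax_right in Ht by lra.
    destruct (Rle_dec al be).
    - rewrite Rmin_left, Rmax_right by lra. split; nra.
    - rewrite Rmin_right, Rmax_left by lra. split; nra. }
  replace (a + RtoC be * d - (a + RtoC al * d))%C with (RtoC (be - al) * d)%C by (rewrite RtoC_minus; ring).
  rewrite <- Cmult_assoc, (Cmult_comm d), Cmult_assoc, <- CRInt_scal by exact HG'.
  replace (CRInt G al be) with (CRInt G ((be - al) * 0 + al) ((be - al) * 1 + al)) by (f_equal; ring).
  rewrite <- CRInt_comp_lin; [apply Cmult_comm|].
  replace ((be - al) * 0 + al) with al by ring. replace ((be - al) * 1 + al) with be by ring. exact HG.
Qed.

Lemma seg_int_split k a b (l : R) : 0 <= l <= 1 -> seg_cont k a b ->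
  seg_int k a b = (seg_int k a (a + RtoC l * (b - a)) + seg_int k (a + RtoC l * (b - a)) b)%C.
Proof.
  intros Hl H.
  assert (Hc : forall u v, 0 <= u <= 1 -> 0 <= v <= 1 ->
             forall s, Rmin u v <= s <= Rmax u v -> ccont k (a + RtoC s * (b - a))%C).
  { intros u v Hu Hv s Hs. apply H. split; [eapply Rle_trans, Hs | eapply Rle_trans; [apply Hs|]];
      [apply Rmin_glb | apply Rmax_lub]; lra. }
  assert (E0 : a = (a + RtoC 0 * (b - a))%C) by ring.
  assert (E1 : b = (a + RtoC 1 * (b - a))%C) by ring.
  rewrite (seg_int_reparam k a (b - a) 0 1 a b E0 E1) by (apply Hc; lra).
  rewrite (seg_int_reparam k a (b - a) 0 l a _ E0 eq_refl) by (apply Hc; lra).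
  rewrite (seg_int_reparam k a (b - a) l 1 _ b eq_refl E1) by (apply Hc; lra).
  rewrite <- Cmult_plus_distr_l, CRInt_Chasles; [reflexivity | |];
    intros s Hs; apply rcont_affine; revert s Hs; apply Hc; lra.
Qed.

Lemma seg_int_rev k a b : seg_cont k a b -> seg_int k b a = (- seg_int k a b)%C.
Proof.
  intros H.
  assert (Hc : forall s, Rmin 0 1 <= s <= Rmax 0 1 -> ccont k (a + RtoC s * (b - a))%C)
    by (intros s Hs; rewrite Rmin_left, Rmax_right in Hs by lra; apply H, Hs).
  assert (E0 : a = (a + RtoC 0 * (b - a))%C) by ring.
  assert (E1 : b = (a + RtoC 1 * (b - a))%C) by ring.
  rewrite (seg_int_reparam k a (b - a) 0 1 a b E0 E1 Hc).
  rewrite (seg_int_reparam k a (b - a) 1 0 b a E1 E0)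
    by (intros s Hs; apply Hc; rewrite Rmin_comm, Rmax_comm; exact Hs).
  rewrite CRInt_swap; [ring|]. intros s Hs. apply rcont_affine, Hc, Hs.
Qed.

Lemma seg_int_const c a b : seg_int (fun _ => c) a b = (c * (b - a))%C.
Proof. unfold seg_int. rewrite CRInt_const. rewrite RtoC_minus. ring. Qed.

Lemma seg_cont_const c a b : seg_cont (fun _ => c) a b.
Proof. intros s _. apply ccont_const. Qed.

Lemma seg_int_plus k1 k2 a b : seg_cont k1 a b -> seg_cont k2 a b ->
  seg_int (fun w => k1 w + k2 w)%C a b = (seg_int k1 a b + seg_int k2 a b)%C.
Proof.
  intros H1 H2. unfold seg_int.
  rewrite (CRInt_plus (fun t => k1 (a + RtoC t * (b - a))%C) (fun t => k2 (a + RtoC t * (b - a))%C));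
    [ring | apply seg_cont_rcont_on, H1 | apply seg_cont_rcont_on, H2].
Qed.

Lemma seg_int_minus k1 k2 a b : seg_cont k1 a b -> seg_cont k2 a b ->
  seg_int (fun w => k1 w - k2 w)%C a b = (seg_int k1 a b - seg_int k2 a b)%C.
Proof.
  intros H1 H2. unfold seg_int.
  rewrite (CRInt_minus (fun t => k1 (a + RtoC t * (b - a))%C) (fun t => k2 (a + RtoC t * (b - a))%C));
    [ring | apply seg_cont_rcont_on, H1 | apply seg_cont_rcont_on, H2].
Qed.

Lemma seg_int_bound k a b M : seg_cont k a b ->
  (forall s, 0 <= s <= 1 -> Cmod (k (a + RtoC s * (b - a))%C) <= M) ->
  Cmod (seg_int k a b) <= 2 * Cmod (b - a) * M.
Proof.
  intros H HM. unfold seg_int. rewrite Cmod_mult.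
  pose proof (CRInt_bound _ 0 1 M ltac:(lra) (seg_cont_rcont_on _ _ _ H) HM).
  pose proof (Cmod_ge_0 (b - a)). replace (2 * Cmod (b - a) * M) with (Cmod (b - a) * (2 * (1 - 0) * M)) by ring.
  apply Rmult_le_compat_l; assumption.
Qed.

Lemma seg_int_primitive (Phi k : C -> C) a b :
  (forall s, 0 <= s <= 1 -> is_cderiv Phi (a + RtoC s * (b - a))%C (k (a + RtoC s * (b - a))%C)) ->
  seg_cont k a b -> seg_int k a b = (Phi b - Phi a)%C.
Proof.
  intros HD Hc. unfold seg_int.
  rewrite <- CRInt_scal by (apply seg_cont_rcont_on, Hc).
  rewrite (CRInt_FTC (fun s => Phi (a + RtoC s * (b - a))%C)).
  - f_equal; f_equal; ring.
  - intros t Ht. rewrite Rmin_left, Rmax_right in Ht by lra. rewrite Cmult_comm.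
    apply is_rderiv_comp; [apply HD, Ht | apply is_rderiv_affine].
  - intros t Ht. apply rcont_mult; [apply rcont_const | apply seg_cont_rcont_on, Ht; exact Hc].
Qed.

Definition tri_int (k : C -> C) (a b c : C) : C := (seg_int k a b + seg_int k b c + seg_int k c a)%C.

Definition midpoint (p q : C) : C := (p + RtoC (1/2) * (q - p))%C.

Lemma tri_int_subdivide k x y z :
  seg_cont k x y -> seg_cont k y z -> seg_cont k z x ->
  seg_cont k (midpoint x y) (midpoint y z) -> seg_cont k (midpoint y z) (midpoint z x) ->
  seg_cont k (midpoint z x) (midpoint x y) ->
  tri_int k x y z =
  (tri_int k x (midpoint x y) (midpoint z x) + tri_int k (midpoint x y) y (midpoint y z) +
   tri_int k (midpoint z x) (midpoint y z) z + tri_int k (midpoint x y) (midpoint y z) (midpoint z x))%C.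
Proof.
  intros H1 H2 H3 H4 H5 H6. unfold tri_int.
  rewrite (seg_int_rev k (midpoint z x) (midpoint x y)), (seg_int_rev k (midpoint x y) (midpoint y z)),
    (seg_int_rev k (midpoint y z) (midpoint z x)) by assumption.
  unfold midpoint.
  rewrite (seg_int_split k x y (1/2)), (seg_int_split k y z (1/2)), (seg_int_split k z x (1/2)) by (auto; lra).
  ring.
Qed.

Lemma tri_int_plus k1 k2 x y z :
  seg_cont k1 x y -> seg_cont k1 y z -> seg_cont k1 z x ->
  seg_cont k2 x y -> seg_cont k2 y z -> seg_cont k2 z x ->
  tri_int (fun w => k1 w + k2 w)%C x y z = (tri_int k1 x y z + tri_int k2 x y z)%C.
Proof. intros. unfold tri_int. rewrite !seg_int_plus by assumption. ring. Qed.

Lemma tri_int_primitive (Phi k : C -> C) x y z :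
  (forall w, is_cderiv Phi w (k w)) -> (forall w, ccont k w) -> tri_int k x y z = RtoC 0.
Proof.
  intros HD Hc. unfold tri_int.
  rewrite !(seg_int_primitive Phi) by (intros s _; apply HD || apply Hc). ring.
Qed.

Lemma tri_int_affine (al be x y z : C) : tri_int (fun w => al + be * w)%C x y z = RtoC 0.
Proof.
  apply (tri_int_primitive (fun w => al * w + be * RtoC (1/2) * (w * w))%C).
  - intros w.
    replace (al + be * w)%C with (al * 1 + be * RtoC (1/2) * (1 * w + w * 1))%C
      by (destruct al, be, w; C_expand; field).
    apply is_cderiv_plus; apply is_cderiv_scal; [apply is_cderiv_id | apply is_cderiv_mult; apply is_cderiv_id].
  - intros w. apply ccont_plus; [apply ccont_const | apply ccont_mult; [apply ccont_const | apply ccont_id]].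
Qed.

Lemma tri_int_bound k x y z D M :
  seg_cont k x y -> seg_cont k y z -> seg_cont k z x ->
  Cmod (y - x) <= D -> Cmod (z - y) <= D -> Cmod (x - z) <= D ->
  (forall w, Cmod (w - x) <= 2 * D -> Cmod (k w) <= M) ->
  Cmod (tri_int k x y z) <= 6 * D * M.
Proof.
  intros S1 S2 S3 D1 D2 D3 HM.
  assert (HM0 : 0 <= M).
  { eapply Rle_trans; [apply Cmod_ge_0 | apply (HM x)].
    replace (x - x)%C with (RtoC 0) by ring. rewrite Cmod_0. pose proof (Cmod_ge_0 (y - x)). lra. }
  assert (Hseg : forall p q, Cmod (p - x) + Cmod (q - p) <= 2 * D -> Cmod (q - p) <= D ->
            seg_cont k p q -> Cmod (seg_int k p q) <= 2 * D * M).
  { intros p q Hpq Hqp Hs. eapply Rle_trans; [apply seg_int_bound with (M := M); [exact Hs|]|].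
    - intros s Hs01. apply HM.
      replace (p + RtoC s * (q - p) - x)%C with (p - x + RtoC s * (q - p))%C by ring.
      eapply Rle_trans; [apply Cmod_triangle|]. pose proof (Cmod_scal_le s (q - p) Hs01). lra.
    - apply Rmult_le_compat_r; [exact HM0 | lra]. }
  pose proof (Cmod_ge_0 (y - x)). pose proof (Cmod_minus_sym z x).
  assert (Hxx : Cmod (x - x) = 0) by (replace (x - x)%C with (RtoC 0) by ring; apply Cmod_0).
  unfold tri_int. eapply Rle_trans; [apply Cmod_triangle3|].
  pose proof (Hseg x y ltac:(lra) D1 S1). pose proof (Hseg y z ltac:(lra) D2 S2).
  pose proof (Hseg z x ltac:(lra) D3 S3).
  lra.
Qed.

Lemma tri_int_deriv_bound k z0 l x y z D eps del :
  (forall w, Cmod (w - z0) < del -> Cmod (k w - k z0 - l * (w - z0)) <= eps * Cmod (w - z0)) ->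
  seg_cont k x y -> seg_cont k y z -> seg_cont k z x ->
  Cmod (y - x) <= D -> Cmod (z - y) <= D -> Cmod (x - z) <= D ->
  Cmod (x - z0) + 2 * D < del -> 0 <= eps ->
  Cmod (tri_int k x y z) <= 6 * D * (eps * (Cmod (x - z0) + 2 * D)).
Proof.
  intros Hk S1 S2 S3 D1 D2 D3 Hdel Heps.
  (* The linearization of [k] at [z0] has a primitive, so only the remainder contributes. *)
  set (rem := fun w => (k w - k z0 - l * (w - z0))%C).
  assert (Ek : k = fun w => (rem w + ((k z0 - l * z0) + l * w))%C) by (extensionality w; unfold rem; ring).
  assert (Srem : forall p q, seg_cont k p q -> seg_cont rem p q).
  { intros p q Hs s Hs01. unfold rem. repeat apply ccont_minus; try apply ccont_const; [apply Hs, Hs01|].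
    apply ccont_mult; [apply ccont_const | apply ccont_minus; [apply ccont_id | apply ccont_const]]. }
  assert (Saff : forall p q, seg_cont (fun w => (k z0 - l * z0) + l * w)%C p q).
  { intros p q s _. apply ccont_plus; [apply ccont_const | apply ccont_mult; [apply ccont_const | apply ccont_id]]. }
  rewrite Ek, tri_int_plus, tri_int_affine, Cplus_0_r by auto.
  apply tri_int_bound; auto. intros w Hw.
  assert (Hwz : Cmod (w - z0) <= Cmod (x - z0) + 2 * D).
  { replace (w - z0)%C with ((w - x) + (x - z0))%C by ring. pose proof (Cmod_triangle (w - x) (x - z0)). lra. }
  eapply Rle_trans; [apply Hk; lra | apply Rmult_le_compat_l; assumption].
Qed.

(** * Goursat's theorem *)

Lemma pow2_ge1 n : 1 <= 2 ^ n.
Proof. apply pow_R1_Rle. lra. Qed.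

Lemma pow2_small (K eps : R) : 0 < eps -> exists N : nat, K / 2 ^ N < eps.
Proof.
  intros He.
  assert (HN : exists N : nat, K / eps < INR N).
  { destruct (archimed (K / eps)) as [H _]. destruct (Z_lt_le_dec 0 (up (K / eps))) as [Hp|Hn].
    - exists (Z.to_nat (up (K / eps))). rewrite INR_IZR_INZ, Z2Nat.id by lia. exact H.
    - exists 0%nat. apply IZR_le in Hn. simpl. lra. }
  destruct HN as [N HN]. exists N.
  assert (INR_le_pow2 : forall n, INR n <= 2 ^ n).
  { induction n; [simpl; lra|]. rewrite S_INR. simpl. pose proof (pow2_ge1 n). lra. }
  pose proof (INR_le_pow2 N). pose proof (pow2_ge1 N).
  apply Rmult_lt_reg_r with (2 ^ N / eps); [apply Rdiv_lt_0_compat; lra|].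
  replace (K / 2 ^ N * (2 ^ N / eps)) with (K / eps) by (field; lra).
  replace (eps * (2 ^ N / eps)) with (2 ^ N) by (field; lra). lra.
Qed.

Lemma geometric_cauchy_limit (x : nat -> R) (B : R) :
  (forall n, Rabs (x (S n) - x n) <= B / 2 ^ n) ->
  exists l, forall n, Rabs (x n - l) <= 2 * B / 2 ^ n.
Proof.
  intros H.
  assert (G : forall n m, (n <= m)%nat -> Rabs (x m - x n) <= 2 * B / 2 ^ n - 2 * B / 2 ^ m).
  { intros n m Hnm. induction Hnm.
    - replace (x n - x n) with 0 by ring. rewrite Rabs_R0. lra.
    - replace (x (S m) - x n) with ((x (S m) - x m) + (x m - x n)) by ring.
      eapply Rle_trans; [apply Rabs_triang|]. specialize (H m). pose proof (pow2_ge1 m).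
      replace (2 * B / 2 ^ S m) with (B / 2 ^ m) by (simpl; field; lra).
      replace (2 * B / 2 ^ m) with (B / 2 ^ m + B / 2 ^ m) in IHHnm by (field; lra). lra. }
  assert (HB : 0 <= B) by (pose proof (Rabs_pos (x 1%nat - x 0%nat)); specialize (H 0%nat); simpl in H; lra).
  assert (G' : forall n m, (n <= m)%nat -> Rabs (x m - x n) <= 2 * B / 2 ^ n).
  { intros n m Hnm. specialize (G n m Hnm).
    assert (0 <= 2 * B / 2 ^ m) by (apply Rdiv_le_0_compat; [lra | pose proof (pow2_ge1 m); lra]). lra. }
  assert (Hc : Cauchy_crit x).
  { intros eps He. destruct (pow2_small (4 * B) eps He) as [N HN]. exists N. intros n m Hn Hm.
    unfold Rdist. replace (x n - x m) with ((x n - x N) - (x m - x N)) by ring.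
    eapply Rle_lt_trans; [apply Rabs_triang|]. rewrite Rabs_Ropp.
    pose proof (G' N n Hn). pose proof (G' N m Hm). pose proof (pow2_ge1 N).
    replace (4 * B / 2 ^ N) with (2 * B / 2 ^ N + 2 * B / 2 ^ N) in HN by (field; lra). lra. }
  destruct (Rcomplete.R_complete x Hc) as [l Hl]. exists l. intros n.
  apply Rnot_lt_le. intros Hlt.
  destruct (Hl (Rabs (x n - l) - 2 * B / 2 ^ n) ltac:(lra)) as [N HN].
  specialize (HN (max n N) ltac:(lia)). specialize (G' n (max n N) ltac:(lia)). unfold Rdist in HN.
  replace (x n - l) with (- (x (max n N) - x n) + (x (max n N) - l)) in Hlt by ring.
  pose proof (Rabs_triang (- (x (max n N) - x n)) (x (max n N) - l)). rewrite Rabs_Ropp in H0.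
  replace (x n - l) with (- (x (max n N) - x n) + (x (max n N) - l)) in HN by ring. lra.
Qed.

Lemma geometric_limit_ge0 (x : nat -> R) l K :
  (forall n, 0 <= x n) -> (forall n, Rabs (x n - l) <= K / 2 ^ n) -> 0 <= l.
Proof.
  intros H1 H2. apply Rnot_lt_le. intros Hl. destruct (pow2_small K (- l)) as [n Hn]; [lra|].
  specialize (H1 n). specialize (H2 n). apply Rabs_le_between in H2. lra.
Qed.

Lemma le_0_of_le_eps (x K : R) : 0 <= K -> (forall eps, 0 < eps -> x <= K * eps) -> x <= 0.
Proof.
  intros HK H. apply Rnot_lt_le. intros Hx.
  assert (He : 0 < x / (2 * (K + 1))) by (apply Rdiv_lt_0_compat; lra).
  specialize (H _ He). assert (K * (x / (2 * (K + 1))) < x).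
  { apply Rmult_lt_reg_r with (2 * (K + 1)); [lra|]. field_simplify; [nra | lra]. }
  lra.
Qed.

Definition tri_map (a b c v : C) : C := (a + RtoC (Re v) * (b - a) + RtoC (Im v) * (c - a))%C.

Definition in_simplex (v : C) : Prop := 0 <= Re v /\ 0 <= Im v /\ Re v + Im v <= 1.

Lemma tri_map_comb a b c p q s :
  tri_map a b c (p + RtoC s * (q - p))%C = (tri_map a b c p + RtoC s * (tri_map a b c q - tri_map a b c p))%C.
Proof. destruct a, b, c, p, q. unfold tri_map. C_expand; ring. Qed.

Lemma in_simplex_comb p q s : in_simplex p -> in_simplex q -> 0 <= s <= 1 -> in_simplex (p + RtoC s * (q - p))%C.
Proof.
  destruct p as [p1 p2], q as [q1 q2]. unfold in_simplex, RtoC, Cmult, Cplus, Cminus, Copp; simpl.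
  intros [A1 [A2 A3]] [B1 [B2 B3]] Hs. split; [|split]; nra.
Qed.

Lemma seg_cont_tri_map k a b c p q : (forall v, in_simplex v -> ccont k (tri_map a b c v)) ->
  in_simplex p -> in_simplex q -> seg_cont k (tri_map a b c p) (tri_map a b c q).
Proof. intros H Hp Hq s Hs. rewrite <- tri_map_comb. apply H, in_simplex_comb; assumption. Qed.

Lemma tri_map_midpoint a b c p q : tri_map a b c (midpoint p q) = midpoint (tri_map a b c p) (tri_map a b c q).
Proof. apply tri_map_comb. Qed.

Lemma in_simplex_midpoint p q : in_simplex p -> in_simplex q -> in_simplex (midpoint p q).
Proof. intros. apply in_simplex_comb; auto; lra. Qed.

Lemma tri_map_lipschitz a b c v w :
  Cmod (tri_map a b c v - tri_map a b c w) <= (Cmod (b - a) + Cmod (c - a) + 1) * Cmod (v - w).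
Proof.
  replace (tri_map a b c v - tri_map a b c w)%C with (RtoC (Re (v - w)) * (b - a) + RtoC (Im (v - w)) * (c - a))%C
    by (destruct a, b, c, v, w; unfold tri_map; C_expand; ring).
  eapply Rle_trans; [apply Cmod_triangle|]. rewrite !Cmod_mult, !Cmod_R.
  pose proof (re_le_Cmod (v - w)). pose proof (im_le_Cmod (v - w)).
  pose proof (Cmod_ge_0 (b - a)). pose proof (Cmod_ge_0 (c - a)). pose proof (Cmod_ge_0 (v - w)).
  assert (Rabs (Re (v - w)) * Cmod (b - a) <= Cmod (v - w) * Cmod (b - a)) by (apply Rmult_le_compat_r; lra).
  assert (Rabs (Im (v - w)) * Cmod (c - a) <= Cmod (v - w) * Cmod (c - a)) by (apply Rmult_le_compat_r; lra).
  nra.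
Qed.

Definition tri := (C * C * C)%type.

Definition quarter1 (T : tri) : tri := let '(p, q, r) := T in (p, midpoint p q, midpoint r p).
Definition quarter2 (T : tri) : tri := let '(p, q, r) := T in (midpoint p q, q, midpoint q r).
Definition quarter3 (T : tri) : tri := let '(p, q, r) := T in (midpoint r p, midpoint q r, r).
Definition quarter4 (T : tri) : tri := let '(p, q, r) := T in (midpoint p q, midpoint q r, midpoint r p).

Definition in_simplex3 (T : tri) : Prop := let '(p, q, r) := T in in_simplex p /\ in_simplex q /\ in_simplex r.

Definition sides_le (T : tri) (D : R) : Prop :=
  let '(p, q, r) := T in Cmod (q - p) <= D /\ Cmod (r - q) <= D /\ Cmod (p - r) <= D.

Definition vertex0 (T : tri) : C := let '(p, _, _) := T in p.

Lemma in_simplex3_quarters T : in_simplex3 T ->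
  in_simplex3 (quarter1 T) /\ in_simplex3 (quarter2 T) /\ in_simplex3 (quarter3 T) /\ in_simplex3 (quarter4 T).
Proof.
  destruct T as [[p q] r]. simpl. intros [Hp [Hq Hr]].
  pose proof (in_simplex_midpoint p q Hp Hq). pose proof (in_simplex_midpoint q r Hq Hr).
  pose proof (in_simplex_midpoint r p Hr Hp). tauto.
Qed.

Lemma Cmod_half_le (u v : C) D :
  Cmod v <= D -> (u = RtoC (1/2) * v \/ u = RtoC (1/2) * (- v))%C -> Cmod u <= D / 2.
Proof.
  intros H [E|E]; rewrite E, Cmod_mult, Cmod_R, Rabs_pos_eq by lra; try rewrite Cmod_opp; lra.
Qed.

Ltac half_of_side H :=
  apply (Cmod_half_le _ _ _ H); unfold midpoint; solve [left; C_expand; field | right; C_expand; field].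

Ltac half_side H1 H2 H3 := first [half_of_side H1 | half_of_side H2 | half_of_side H3].

Lemma sides_le_quarters T D : sides_le T D ->
  sides_le (quarter1 T) (D / 2) /\ sides_le (quarter2 T) (D / 2) /\
  sides_le (quarter3 T) (D / 2) /\ sides_le (quarter4 T) (D / 2).
Proof.
  destruct T as [[[p1 p2] [q1 q2]] [r1 r2]]. simpl. intros [H1 [H2 H3]].
  repeat split; half_side H1 H2 H3.
Qed.

Lemma vertex0_quarters T D : sides_le T D ->
  Cmod (vertex0 (quarter1 T) - vertex0 T) <= D / 2 /\ Cmod (vertex0 (quarter2 T) - vertex0 T) <= D / 2 /\
  Cmod (vertex0 (quarter3 T) - vertex0 T) <= D / 2 /\ Cmod (vertex0 (quarter4 T) - vertex0 T) <= D / 2.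
Proof.
  destruct T as [[[p1 p2] [q1 q2]] [r1 r2]]. simpl. intros [H1 [H2 H3]].
  assert (0 <= D) by (pose proof (Cmod_ge_0 ((q1, q2) - (p1, p2))); lra).
  repeat split.
  - replace ((p1, p2) - (p1, p2))%C with (RtoC 0) by ring. rewrite Cmod_0. lra.
  all: half_side H1 H2 H3.
Qed.

Section GoursatNest.

Variables (k : C -> C) (a b c : C).
Hypothesis k_cont : forall v, in_simplex v -> ccont k (tri_map a b c v).

Definition subtri_int (T : tri) : C :=
  let '(p, q, r) := T in tri_int k (tri_map a b c p) (tri_map a b c q) (tri_map a b c r).

Lemma subtri_int_quarters T : in_simplex3 T ->
  subtri_int T = (subtri_int (quarter1 T) + subtri_int (quarter2 T) +
                  subtri_int (quarter3 T) + subtri_int (quarter4 T))%C.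
Proof.
  destruct T as [[p q] r]. simpl. intros [Hp [Hq Hr]]. rewrite !tri_map_midpoint.
  apply tri_int_subdivide; rewrite <- ?tri_map_midpoint;
    apply seg_cont_tri_map; auto; apply in_simplex_midpoint; assumption.
Qed.

Definition goursat_step (T : tri) : tri :=
  if Rle_dec (Cmod (subtri_int T) / 4) (Cmod (subtri_int (quarter1 T))) then quarter1 T
  else if Rle_dec (Cmod (subtri_int T) / 4) (Cmod (subtri_int (quarter2 T))) then quarter2 T
  else if Rle_dec (Cmod (subtri_int T) / 4) (Cmod (subtri_int (quarter3 T))) then quarter3 T
  else quarter4 T.

Lemma goursat_step_quarter T :
  goursat_step T = quarter1 T \/ goursat_step T = quarter2 T \/
  goursat_step T = quarter3 T \/ goursat_step T = quarter4 T.
Proof. unfold goursat_step. repeat destruct Rle_dec; auto. Qed.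

Lemma goursat_step_int T : in_simplex3 T -> Cmod (subtri_int T) / 4 <= Cmod (subtri_int (goursat_step T)).
Proof.
  intros HT.
  assert (Hs : Cmod (subtri_int T) <= Cmod (subtri_int (quarter1 T)) + Cmod (subtri_int (quarter2 T)) +
                                     Cmod (subtri_int (quarter3 T)) + Cmod (subtri_int (quarter4 T))).
  { rewrite (subtri_int_quarters T HT) at 1. eapply Rle_trans; [apply Cmod_triangle|].
    pose proof (Cmod_triangle3 (subtri_int (quarter1 T)) (subtri_int (quarter2 T)) (subtri_int (quarter3 T))). lra. }
  unfold goursat_step. repeat destruct Rle_dec; lra.
Qed.

Fixpoint goursat_nest (n : nat) : tri :=
  match n with O => (RtoC 0, RtoC 1, Ci) | S n' => goursat_step (goursat_nest n') end.

Lemma goursat_nest_inv n :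
  in_simplex3 (goursat_nest n) /\ sides_le (goursat_nest n) (2 / 2 ^ n) /\
  Cmod (subtri_int (goursat_nest 0)) <= Cmod (subtri_int (goursat_nest n)) * (2 ^ n * 2 ^ n).
Proof.
  induction n as [|n [I1 [I2 I3]]].
  - simpl. split; [|split].
    + unfold in_simplex, RtoC, Ci; simpl. repeat split; lra.
    + replace (2 / 2 ^ 0) with 2 by (simpl; field).
      repeat split; (eapply Rle_trans; [apply Cmod_minus_le | rewrite ?Cmod_Ci, ?Cmod_1, ?Cmod_0; lra]).
    + lra.
  - change (goursat_nest (S n)) with (goursat_step (goursat_nest n)).
    destruct (in_simplex3_quarters _ I1) as [C1 [C2 [C3 C4]]].
    destruct (sides_le_quarters _ _ I2) as [D1 [D2 [D3 D4]]].
    pose proof (goursat_step_int _ I1) as SJ. pose proof (pow2_ge1 n).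
    replace (2 / 2 ^ S n) with (2 / 2 ^ n / 2) by (simpl; field; lra).
    split; [|split]; try (destruct (goursat_step_quarter (goursat_nest n)) as [E|[E|[E|E]]]; rewrite E; assumption).
    change (2 ^ S n) with (2 * 2 ^ n).
    assert (Cmod (subtri_int (goursat_nest n)) * (2 ^ n * 2 ^ n) <=
            4 * Cmod (subtri_int (goursat_step (goursat_nest n))) * (2 ^ n * 2 ^ n))
      by (apply Rmult_le_compat_r; nra).
    lra.
Qed.

Lemma goursat_nest_limit :
  exists vs, in_simplex vs /\ forall n, Cmod (vertex0 (goursat_nest n) - vs) <= 4 / 2 ^ n.
Proof.
  set (u := fun n => vertex0 (goursat_nest n)).
  assert (Hmove : forall n, Cmod (u (S n) - u n) <= 1 / 2 ^ n).
  { intros n. destruct (goursat_nest_inv n) as [_ [I2 _]].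
    destruct (vertex0_quarters _ _ I2) as [M1 [M2 [M3 M4]]].
    replace (1 / 2 ^ n) with (2 / 2 ^ n / 2) by (pose proof (pow2_ge1 n); field; lra).
    unfold u. simpl goursat_nest.
    destruct (goursat_step_quarter (goursat_nest n)) as [E|[E|[E|E]]]; rewrite E; assumption. }
  destruct (geometric_cauchy_limit (fun n => Re (u n)) 1) as [lr Hr].
  { intros n. eapply Rle_trans; [|apply (Hmove n)].
    replace (Re (u (S n)) - Re (u n)) with (Re (u (S n) - u n)) by (destruct (u (S n)), (u n); simpl; ring).
    apply re_le_Cmod. }
  destruct (geometric_cauchy_limit (fun n => Im (u n)) 1) as [li Hi].
  { intros n. eapply Rle_trans; [|apply (Hmove n)].
    replace (Im (u (S n)) - Im (u n)) with (Im (u (S n) - u n)) by (destruct (u (S n)), (u n); simpl; ring).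
    apply im_le_Cmod. }
  assert (Hu : forall n, in_simplex (u n)).
  { intros n. unfold u. destruct (goursat_nest_inv n) as [I1 _]. destruct (goursat_nest n) as [[p q] r]. apply I1. }
  exists (lr, li). split.
  - split; [|split]; simpl.
    + apply (geometric_limit_ge0 (fun n => Re (u n)) _ 2); intros n; [apply (Hu n) | specialize (Hr n); lra].
    + apply (geometric_limit_ge0 (fun n => Im (u n)) _ 2); intros n; [apply (Hu n) | specialize (Hi n); lra].
    + cut (0 <= 1 - (lr + li)); [lra|].
      apply (geometric_limit_ge0 (fun n => 1 - (Re (u n) + Im (u n))) _ 4).
      * intros n. destruct (Hu n) as [_ [_ X]]. lra.
      * intros n. specialize (Hr n). specialize (Hi n).
        replace (1 - (Re (u n) + Im (u n)) - (1 - (lr + li))) with (- ((Re (u n) - lr) + (Im (u n) - li))) by ring.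
        rewrite Rabs_Ropp. eapply Rle_trans; [apply Rabs_triang|]. lra.
  - intros n. fold (u n). eapply Rle_trans; [apply Cmod_le_Re_Im|].
    specialize (Hr n). specialize (Hi n). simpl in Hr, Hi.
    replace (Re (u n - (lr, li))%C) with (Re (u n) - lr) by (destruct (u n); simpl; ring).
    replace (Im (u n - (lr, li))%C) with (Im (u n) - li) by (destruct (u n); simpl; ring).
    lra.
Qed.

End GoursatNest.

Theorem goursat k a b c :
  (forall v, in_simplex v -> exists l, is_cderiv k (tri_map a b c v) l) -> tri_int k a b c = RtoC 0.
Proof.
  intros Hd.
  assert (Hc : forall v, in_simplex v -> ccont k (tri_map a b c v))
    by (intros v Hv; destruct (Hd v Hv) as [l Hl]; exact (is_cderiv_cont _ _ _ Hl)).
  destruct (goursat_nest_limit k a b c Hc) as [vs [Hvs Hlim]].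
  destruct (Hd vs Hvs) as [l Hl].
  set (L := Cmod (b - a) + Cmod (c - a) + 1).
  assert (HL : 1 <= L) by (unfold L; pose proof (Cmod_ge_0 (b - a)); pose proof (Cmod_ge_0 (c - a)); lra).
  assert (Lip : forall x y B, Cmod (y - x) <= B -> Cmod (tri_map a b c y - tri_map a b c x) <= L * B)
    by (intros x y B HB; eapply Rle_trans; [apply tri_map_lipschitz | apply Rmult_le_compat_l; lra]).
  replace (tri_int k a b c) with (subtri_int k a b c (goursat_nest k a b c 0))
    by (simpl; unfold tri_map; simpl; f_equal; f_equal; ring).
  apply Cmod_eq_0, Rle_antisym; [|apply Cmod_ge_0].
  apply (le_0_of_le_eps _ (96 * L * L)); [nra|]. intros eps Heps.
  destruct (Hl eps Heps) as [del [Hdel Hk]].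
  destruct (pow2_small (8 * L) del Hdel) as [n Hn].
  destruct (goursat_nest_inv k a b c Hc n) as [I1 [I2 I3]].
  pose proof (Hlim n) as Hvn. pose proof (pow2_ge1 n).
  destruct (goursat_nest k a b c n) as [[p q] r]. simpl in I1, I2, I3, Hvn.
  destruct I1 as [Hp [Hq Hr]]. destruct I2 as [D1 [D2 D3]].
  assert (Hpv := Lip vs p _ Hvn).
  assert (J := tri_int_deriv_bound k (tri_map a b c vs) l (tri_map a b c p) (tri_map a b c q) (tri_map a b c r)
    (L * (2 / 2 ^ n)) eps del Hk (seg_cont_tri_map k a b c p q Hc Hp Hq) (seg_cont_tri_map k a b c q r Hc Hq Hr)
    (seg_cont_tri_map k a b c r p Hc Hr Hp) (Lip _ _ _ D1) (Lip _ _ _ D2) (Lip _ _ _ D3)).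
  assert (L * (4 / 2 ^ n) + 2 * (L * (2 / 2 ^ n)) = 8 * L / 2 ^ n) by (field; lra).
  specialize (J ltac:(lra) (Rlt_le _ _ Heps)).
  eapply Rle_trans; [exact I3|].
  apply Rle_trans with (6 * (L * (2 / 2 ^ n)) * (eps * (8 * L / 2 ^ n)) * (2 ^ n * 2 ^ n)).
  - apply Rmult_le_compat_r; [nra|]. eapply Rle_trans; [exact J|].
    apply Rmult_le_compat_l; [apply Rmult_le_pos; [lra | apply Rmult_le_pos; [lra | apply Rdiv_le_0_compat; lra]]|].
    apply Rmult_le_compat_l; lra.
  - right. field. lra.
Qed.

Lemma tri_map_comp a b c x y z w :
  tri_map a b c (tri_map x y z w) = tri_map (tri_map a b c x) (tri_map a b c y) (tri_map a b c z) w.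
Proof. destruct a, b, c, x, y, z, w. unfold tri_map. C_expand; ring. Qed.

Lemma tri_map_pair a b c s t : tri_map a b c (s, t) = (a + RtoC s * (b - a) + RtoC t * (c - a))%C.
Proof. reflexivity. Qed.

Lemma in_simplex_pair s t : 0 <= s -> 0 <= t -> s + t <= 1 -> in_simplex (s, t).
Proof. intros. unfold in_simplex; simpl. lra. Qed.

Definition det (u v : C) : R := Re u * Im v - Im u * Re v.

Lemma det_neq0_indep u v s t : det u v <> 0 -> (RtoC s * u + RtoC t * v)%C = RtoC 0 -> s = 0 /\ t = 0.
Proof.
  intros Hd E. destruct u as [u1 u2], v as [v1 v2]. unfold det in Hd; simpl in Hd.
  unfold RtoC, Cmult, Cplus in E; simpl in E. injection E as E1 E2.
  assert (s * (u1 * v2 - u2 * v1) = 0)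
    by (transitivity (v2 * (s * u1 + t * v1) - v1 * (s * u2 + t * v2)); [ring|];
        replace (s * u1 + t * v1) with 0 by lra; replace (s * u2 + t * v2) with 0 by lra; ring).
  assert (t * (u1 * v2 - u2 * v1) = 0)
    by (transitivity (u1 * (s * u2 + t * v2) - u2 * (s * u1 + t * v1)); [ring|];
        replace (s * u1 + t * v1) with 0 by lra; replace (s * u2 + t * v2) with 0 by lra; ring).
  split; apply (Rmult_eq_reg_r (u1 * v2 - u2 * v1)); lra.
Qed.

Lemma tri_map_neq_vertex p b c v : det (b - p) (c - p) <> 0 -> 0 < Re v + Im v -> tri_map p b c v <> p.
Proof.
  intros Hd Hv E. assert (E' : (RtoC (Re v) * (b - p) + RtoC (Im v) * (c - p))%C = RtoC 0).
  { transitivity (tri_map p b c v - p)%C; [unfold tri_map; ring | rewrite E; ring]. }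
  destruct (det_neq0_indep _ _ _ _ Hd E'). lra.
Qed.

Lemma Rdiv_in_unit u v : 0 < v -> 0 <= u <= v -> 0 <= u / v <= 1.
Proof.
  intros Hv Hu. split; [apply Rdiv_le_0_compat; lra|].
  apply Rmult_le_reg_r with v; [exact Hv|]. unfold Rdiv. rewrite Rmult_assoc, Rinv_l; lra.
Qed.

Lemma seg_cont_line k a d x y :
  seg_cont k (a + RtoC x * d) (a + RtoC y * d) ->
  forall s, Rmin x y <= s <= Rmax x y -> ccont k (a + RtoC s * d)%C.
Proof.
  intros H s Hs. destruct (Req_dec x y) as [E|E].
  - subst y. rewrite Rmin_left, Rmax_left in Hs by lra. replace s with x by lra.
    replace (a + RtoC x * d)%C with (a + RtoC x * d + RtoC 0 * (a + RtoC x * d - (a + RtoC x * d)))%C by ring.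
    apply H. lra.
  - set (t := (s - x) / (y - x)).
    assert (Ht : 0 <= t <= 1).
    { unfold t, Rmin, Rmax in *. destruct (Rle_dec x y).
      - apply Rdiv_in_unit; lra.
      - replace ((s - x) / (y - x)) with ((x - s) / (x - y)) by (field; lra). apply Rdiv_in_unit; lra. }
    replace (a + RtoC s * d)%C with (a + RtoC x * d + RtoC t * (a + RtoC y * d - (a + RtoC x * d)))%C.
    + apply H, Ht.
    + assert (Et : s = x + t * (y - x)) by (unfold t; field; lra).
      rewrite Et at 1. rewrite RtoC_plus, RtoC_mult, RtoC_minus. ring.
Qed.

Lemma seg_cont_tri_edges k a b c : (forall v, in_simplex v -> ccont k (tri_map a b c v)) ->
  seg_cont k a b /\ seg_cont k b c /\ seg_cont k c a.
Proof.
  intros Hc.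
  assert (E0 : tri_map a b c (0, 0) = a) by (rewrite tri_map_pair; ring).
  assert (E1 : tri_map a b c (1, 0) = b) by (rewrite tri_map_pair; ring).
  assert (E2 : tri_map a b c (0, 1) = c) by (rewrite tri_map_pair; ring).
  assert (I0 : in_simplex (0, 0)) by (apply in_simplex_pair; lra).
  assert (I1 : in_simplex (1, 0)) by (apply in_simplex_pair; lra).
  assert (I2 : in_simplex (0, 1)) by (apply in_simplex_pair; lra).
  pose proof (seg_cont_tri_map k a b c _ _ Hc I0 I1) as S1.
  pose proof (seg_cont_tri_map k a b c _ _ Hc I1 I2) as S2.
  pose proof (seg_cont_tri_map k a b c _ _ Hc I2 I0) as S3.
  rewrite E0, E1, E2 in *. tauto.
Qed.

Lemma collinear_det0 u v : det u v = 0 -> u <> RtoC 0 -> exists l, v = (RtoC l * u)%C.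
Proof.
  intros Hdet Hu.
  assert (Hn : 0 < Re u * Re u + Im u * Im u).
  { replace (Re u * Re u + Im u * Im u) with (Cmod u ^ 2) by (rewrite Cmod2_alt; ring).
    apply pow_lt, Cmod_gt_0, Hu. }
  exists ((Re u * Re v + Im u * Im v) / (Re u * Re u + Im u * Im u)).
  unfold det in Hdet. destruct u as [u1 u2], v as [v1 v2]. simpl in *.
  assert (E1 : u2 * (u1 * v2 - u2 * v1) = 0) by (rewrite Hdet; ring).
  assert (E2 : u1 * (u1 * v2 - u2 * v1) = 0) by (rewrite Hdet; ring).
  unfold RtoC, Cmult; simpl. f_equal;
    apply (Rmult_eq_reg_r (u1 * u1 + u2 * u2)); try lra; field_simplify; try lra; nra.
Qed.

(* Collinear vertices: the three edges are pieces of one line, so their integrals cancel by Chasles. *)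
Lemma goursat_collinear k p b c :
  (forall v, in_simplex v -> ccont k (tri_map p b c v)) -> det (b - p) (c - p) = 0 -> tri_int k p b c = RtoC 0.
Proof.
  intros Hc Hdet. destruct (seg_cont_tri_edges k p b c Hc) as [S1 [S2 S3]].
  destruct (Ceq_dec (b - p) 0) as [Hu|Hu].
  { assert (Eb : b = p) by (apply Ceq_minus, Hu). subst b. unfold tri_int.
    rewrite (seg_int_rev k c p S3). unfold seg_int at 1. replace (p - p)%C with (RtoC 0) by ring. ring. }
  destruct (collinear_det0 _ _ Hdet Hu) as [l Hl]. set (u := (b - p)%C) in *.
  assert (Ep : p = (p + RtoC 0 * u)%C) by ring.
  assert (Eb : b = (p + RtoC 1 * u)%C) by (unfold u; ring).
  assert (Ec : c = (p + RtoC l * u)%C) by (rewrite <- Hl; ring).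
  assert (H01 := seg_cont_line k p u 0 1 ltac:(rewrite <- Ep, <- Eb; exact S1)).
  assert (H1l := seg_cont_line k p u 1 l ltac:(rewrite <- Eb, <- Ec; exact S2)).
  assert (Hl0 := seg_cont_line k p u l 0 ltac:(rewrite <- Ec, <- Ep; exact S3)).
  unfold tri_int.
  rewrite (seg_int_reparam k p u 0 1 p b Ep Eb H01), (seg_int_reparam k p u 1 l b c Eb Ec H1l),
    (seg_int_reparam k p u l 0 c p Ec Ep Hl0).
  rewrite <- !Cmult_plus_distr_l, CRInt_Chasles, CRInt_swap; [ring| | |];
    intros s Hs; apply rcont_affine;
    first [exact (H01 s Hs) | exact (H1l s Hs) | exact (Hl0 s Hs)].
Qed.

Lemma goursat_avoiding_vertex k p b c x y z :
  det (b - p) (c - p) <> 0 ->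
  (forall v, in_simplex v -> tri_map p b c v <> p -> exists l, is_cderiv k (tri_map p b c v) l) ->
  (forall v, in_simplex v -> in_simplex (tri_map x y z v) /\ 0 < Re (tri_map x y z v) + Im (tri_map x y z v)) ->
  tri_int k (tri_map p b c x) (tri_map p b c y) (tri_map p b c z) = RtoC 0.
Proof.
  intros Hdet Hd Hxyz. apply goursat. intros v Hv. rewrite <- tri_map_comp.
  destruct (Hxyz v Hv) as [H1 H2]. apply Hd; [exact H1 | apply tri_map_neq_vertex; assumption].
Qed.

(* The two triangles cut off avoid the vertex [p], so Goursat applies to them. *)
Lemma tri_int_cut_corner k p b c e :
  (forall v, in_simplex v -> ccont k (tri_map p b c v)) ->
  (forall v, in_simplex v -> tri_map p b c v <> p -> exists l, is_cderiv k (tri_map p b c v) l) ->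
  det (b - p) (c - p) <> 0 -> 0 < e < 1 ->
  tri_int k p b c = tri_int k p (p + RtoC e * (b - p)) (p + RtoC e * (c - p)).
Proof.
  intros Hc Hd Hdet He.
  assert (G1 := goursat_avoiding_vertex k p b c (e, 0) (1, 0) (0, e) Hdet Hd).
  assert (G2 := goursat_avoiding_vertex k p b c (1, 0) (0, 1) (0, e) Hdet Hd).
  specialize (G1 ltac:(intros [v1 v2] [H1 [H2 H3]]; unfold tri_map, in_simplex, RtoC, Cmult, Cplus, Cminus, Copp;
                      simpl in *; split; [repeat split|]; nra)).
  specialize (G2 ltac:(intros [v1 v2] [H1 [H2 H3]]; unfold tri_map, in_simplex, RtoC, Cmult, Cplus, Cminus, Copp;
                      simpl in *; split; [repeat split|]; nra)).
  assert (Ie0 : in_simplex (e, 0)) by (apply in_simplex_pair; lra).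
  assert (I10 : in_simplex (1, 0)) by (apply in_simplex_pair; lra).
  assert (I0e : in_simplex (0, e)) by (apply in_simplex_pair; lra).
  assert (Sbc := seg_cont_tri_map k p b c _ _ Hc Ie0 I0e).
  assert (Sbc' := seg_cont_tri_map k p b c _ _ Hc I10 I0e).
  destruct (seg_cont_tri_edges k p b c Hc) as [S1 [S2 S3]].
  assert (Eb' : tri_map p b c (e, 0) = (p + RtoC e * (b - p))%C) by (rewrite tri_map_pair; ring).
  assert (Ec' : tri_map p b c (0, e) = (p + RtoC e * (c - p))%C) by (rewrite tri_map_pair; ring).
  assert (Eb : tri_map p b c (1, 0) = b) by (rewrite tri_map_pair; ring).
  assert (Ec : tri_map p b c (0, 1) = c) by (rewrite tri_map_pair; ring).
  rewrite Eb', Eb, Ec' in G1. rewrite Eb, Ec, Ec' in G2. rewrite Eb', Ec' in Sbc. rewrite Eb, Ec' in Sbc'.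
  unfold tri_int in *.
  rewrite (seg_int_split k p b e), (seg_int_split k c p (1 - e)) by (assumption || lra).
  replace (c + RtoC (1 - e) * (p - c))%C with (p + RtoC e * (c - p))%C by (rewrite RtoC_minus; ring).
  set (b' := (p + RtoC e * (b - p))%C) in *. set (c' := (p + RtoC e * (c - p))%C) in *.
  rewrite (seg_int_rev k b' c' Sbc) in G1. rewrite (seg_int_rev k b c' Sbc') in G2.
  transitivity ((seg_int k p b' + seg_int k b' c' + seg_int k c' p) +
                (seg_int k b' b + seg_int k b c' + - seg_int k b' c') +
                (seg_int k b c + seg_int k c c' + - seg_int k b c'))%C; [ring|].
  rewrite G1, G2. ring.
Qed.

Lemma tri_int_corner_bound k p u v e d0 :
  seg_cont k p (p + RtoC e * u) -> seg_cont k (p + RtoC e * u) (p + RtoC e * v) -> seg_cont k (p + RtoC e * v) p ->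
  (forall w, Cmod (w - p) < d0 -> Cmod (k w - k p) < 1) ->
  0 < e -> 2 * (e * (Cmod u + Cmod v + 1)) < d0 ->
  Cmod (tri_int k p (p + RtoC e * u) (p + RtoC e * v)) <= 6 * (e * (Cmod u + Cmod v + 1)) * (Cmod (k p) + 1).
Proof.
  intros S1 S2 S3 K0 He HeS. pose proof (Cmod_ge_0 u). pose proof (Cmod_ge_0 v).
  apply tri_int_bound; try assumption.
  - replace (p + RtoC e * u - p)%C with (RtoC e * u)%C by ring.
    rewrite Cmod_mult, Cmod_R, Rabs_pos_eq; nra.
  - replace (p + RtoC e * v - (p + RtoC e * u))%C with (RtoC e * (v - u))%C by ring.
    rewrite Cmod_mult, Cmod_R, Rabs_pos_eq by lra. pose proof (Cmod_minus_le v u). nra.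
  - replace (p - (p + RtoC e * v))%C with (- (RtoC e * v))%C by ring.
    rewrite Cmod_opp, Cmod_mult, Cmod_R, Rabs_pos_eq; nra.
  - intros w Hw. specialize (K0 w ltac:(lra)).
    replace (k w) with (k w - k p + k p)%C by ring. pose proof (Cmod_triangle (k w - k p) (k p)). lra.
Qed.

(* Cut off a corner at [p] of size [e]: the integral is unchanged and the corner contributes [O(e)]. *)
Lemma goursat_nondegenerate k p b c :
  (forall v, in_simplex v -> ccont k (tri_map p b c v)) ->
  (forall v, in_simplex v -> tri_map p b c v <> p -> exists l, is_cderiv k (tri_map p b c v) l) ->
  det (b - p) (c - p) <> 0 -> tri_int k p b c = RtoC 0.
Proof.
  intros Hc Hd Hdet.
  assert (Sc : forall s1 t1 s2 t2, in_simplex (s1, t1) -> in_simplex (s2, t2) ->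
             seg_cont k (p + RtoC s1 * (b - p) + RtoC t1 * (c - p)) (p + RtoC s2 * (b - p) + RtoC t2 * (c - p)))
    by (intros; rewrite <- !tri_map_pair; apply seg_cont_tri_map; assumption).
  assert (Cp : ccont k p).
  { replace p with (tri_map p b c (0, 0)) by (rewrite tri_map_pair; ring). apply Hc, in_simplex_pair; lra. }
  destruct (Cp 1 Rlt_0_1) as [d0 [Hd0 K0]].
  set (M := Cmod (k p) + 1). set (S := Cmod (b - p) + Cmod (c - p) + 1).
  pose proof (Cmod_ge_0 (b - p)). pose proof (Cmod_ge_0 (c - p)). pose proof (Cmod_ge_0 (k p)).
  apply Cmod_eq_0, Rle_antisym; [|apply Cmod_ge_0].
  apply (le_0_of_le_eps _ (6 * S * M)); [unfold S, M; nra|]. intros eps Heps.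
  set (e := Rmin eps (Rmin (1/2) (d0 / (4 * S)))).
  assert (HS : 0 < S) by (unfold S; lra).
  assert (He1 : e <= eps) by apply Rmin_l.
  assert (He2 : e <= 1/2) by (eapply Rle_trans; [apply Rmin_r | apply Rmin_l]).
  assert (He3 : e <= d0 / (4 * S)) by (eapply Rle_trans; [apply Rmin_r | apply Rmin_r]).
  assert (He0 : 0 < e) by (repeat apply Rmin_glb_lt; try lra; apply Rdiv_lt_0_compat; lra).
  assert (HeS : 2 * (e * S) < d0).
  { apply Rle_lt_trans with (2 * (d0 / (4 * S) * S)).
    - apply Rmult_le_compat_l; [lra|]. apply Rmult_le_compat_r; lra.
    - replace (2 * (d0 / (4 * S) * S)) with (d0 / 2) by (field; lra). lra. }
  rewrite (tri_int_cut_corner k p b c e Hc Hd Hdet) by lra.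
  assert (I0 : in_simplex (0, 0)) by (apply in_simplex_pair; lra).
  assert (Ie0 : in_simplex (e, 0)) by (apply in_simplex_pair; lra).
  assert (I0e : in_simplex (0, e)) by (apply in_simplex_pair; lra).
  assert (S1 := Sc 0 0 e 0 I0 Ie0). assert (S2 := Sc e 0 0 e Ie0 I0e). assert (S3 := Sc 0 e 0 0 I0e I0).
  replace (p + RtoC 0 * (b - p) + RtoC 0 * (c - p))%C with p in S1, S3 by ring.
  replace (p + RtoC e * (b - p) + RtoC 0 * (c - p))%C with (p + RtoC e * (b - p))%C in S1, S2 by ring.
  replace (p + RtoC 0 * (b - p) + RtoC e * (c - p))%C with (p + RtoC e * (c - p))%C in S2, S3 by ring.
  eapply Rle_trans; [apply (tri_int_corner_bound k p (b - p) (c - p) e d0); assumption|].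
  fold S M. assert (e * S * M <= eps * S * M)
    by (apply Rmult_le_compat_r; [unfold M; lra|]; apply Rmult_le_compat_r; lra).
  lra.
Qed.

Theorem goursat_except_vertex k p b c :
  (forall v, in_simplex v -> ccont k (tri_map p b c v)) ->
  (forall v, in_simplex v -> tri_map p b c v <> p -> exists l, is_cderiv k (tri_map p b c v) l) ->
  tri_int k p b c = RtoC 0.
Proof.
  intros Hc Hd. destruct (Req_dec (det (b - p) (c - p)) 0) as [H|H].
  - apply goursat_collinear; assumption.
  - apply goursat_nondegenerate; assumption.
Qed.

(** * Primitives on a ball *)

Definition in_ball (c0 : C) (r : R) (w : C) : Prop := Cmod (w - c0) < r.

Lemma in_ball_tri_map c0 r p z w v :
  in_ball c0 r p -> in_ball c0 r z -> in_ball c0 r w -> in_simplex v -> in_ball c0 r (tri_map p z w v).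
Proof.
  unfold in_ball, in_simplex. intros Hp Hz Hw [H1 [H2 H3]].
  replace (tri_map p z w v - c0)%C
    with (RtoC (1 - Re v - Im v) * (p - c0) + RtoC (Re v) * (z - c0) + RtoC (Im v) * (w - c0))%C
    by (unfold tri_map; rewrite !RtoC_minus; ring).
  eapply Rle_lt_trans; [apply Cmod_triangle3|]. rewrite !Cmod_mult, !Cmod_R, !Rabs_pos_eq by lra.
  set (m := Rmax (Cmod (p - c0)) (Rmax (Cmod (z - c0)) (Cmod (w - c0)))).
  assert (Hm : m < r) by (repeat apply Rmax_lub_lt; assumption).
  assert (M1 : Cmod (p - c0) <= m) by apply Rmax_l.
  assert (M2 : Cmod (z - c0) <= m) by (eapply Rle_trans; [apply Rmax_l | apply Rmax_r]).
  assert (M3 : Cmod (w - c0) <= m) by (eapply Rle_trans; [apply Rmax_r | apply Rmax_r]).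
  assert ((1 - Re v - Im v) * Cmod (p - c0) <= (1 - Re v - Im v) * m) by (apply Rmult_le_compat_l; lra).
  assert (Re v * Cmod (z - c0) <= Re v * m) by (apply Rmult_le_compat_l; lra).
  assert (Im v * Cmod (w - c0) <= Im v * m) by (apply Rmult_le_compat_l; lra).
  lra.
Qed.

Lemma in_ball_near c0 r z : in_ball c0 r z -> near z (in_ball c0 r).
Proof.
  intros Hz. exists (r - Cmod (z - c0)). split; [unfold in_ball in Hz; lra|]. intros w Hw. unfold in_ball.
  replace (w - c0)%C with ((w - z) + (z - c0))%C by ring. eapply Rle_lt_trans; [apply Cmod_triangle | lra].
Qed.

Lemma in_ball_segment c0 r a b s : in_ball c0 r a -> in_ball c0 r b -> 0 <= s <= 1 ->
  in_ball c0 r (a + RtoC s * (b - a))%C.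
Proof.
  intros Ha Hb Hs. unfold in_ball in *.
  replace (a + RtoC s * (b - a) - c0)%C with (RtoC (1 - s) * (a - c0) + RtoC s * (b - c0))%C
    by (rewrite RtoC_minus; ring).
  eapply Rle_lt_trans; [apply Cmod_triangle|]. rewrite !Cmod_mult, !Cmod_R, !Rabs_pos_eq by lra.
  assert (Hm : Rmax (Cmod (a - c0)) (Cmod (b - c0)) < r) by (apply Rmax_lub_lt; assumption).
  assert ((1 - s) * Cmod (a - c0) <= (1 - s) * Rmax (Cmod (a - c0)) (Cmod (b - c0)))
    by (apply Rmult_le_compat_l; [lra | apply Rmax_l]).
  assert (s * Cmod (b - c0) <= s * Rmax (Cmod (a - c0)) (Cmod (b - c0)))
    by (apply Rmult_le_compat_l; [lra | apply Rmax_r]).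
  lra.
Qed.

Section BallPrimitive.

Variables (k : C -> C) (c0 p : C) (r : R).
Hypothesis p_in : in_ball c0 r p.
Hypothesis k_cont : forall w, in_ball c0 r w -> ccont k w.
Hypothesis k_holo : forall w, in_ball c0 r w -> w <> p -> exists l, is_cderiv k w l.

Lemma seg_int_chasles_ball z w : in_ball c0 r z -> in_ball c0 r w ->
  seg_int k p w = (seg_int k p z + seg_int k z w)%C.
Proof.
  intros Hz Hw.
  assert (Hc : forall v, in_simplex v -> ccont k (tri_map p z w v))
    by (intros v Hv; apply k_cont, in_ball_tri_map; assumption).
  assert (HT : tri_int k p z w = RtoC 0).
  { apply goursat_except_vertex; [exact Hc|]. intros v Hv Hne.
    apply k_holo; [apply in_ball_tri_map; assumption | exact Hne]. }
  destruct (seg_cont_tri_edges k p z w Hc) as [_ [_ Swp]].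
  unfold tri_int in HT. rewrite (seg_int_rev k w p Swp).
  transitivity (seg_int k p z + seg_int k z w - (seg_int k p z + seg_int k z w + seg_int k w p))%C;
    [ring | rewrite HT; ring].
Qed.

Theorem is_cderiv_seg_int z : in_ball c0 r z -> is_cderiv (fun w => seg_int k p w) z (k z).
Proof.
  intros Hz eps He.
  destruct (k_cont z Hz (eps / 4)) as [d1 [Hd1 K1]]; [lra|].
  destruct (in_ball_near c0 r z Hz) as [d2 [Hd2 K2]].
  exists (Rmin d1 d2). split; [apply Rmin_glb_lt; assumption|]. intros w Hw.
  pose proof (Rmin_l d1 d2). pose proof (Rmin_r d1 d2).
  assert (Hwb : in_ball c0 r w) by (apply K2; lra).
  assert (Szw : seg_cont k z w) by (intros s Hs; apply k_cont, in_ball_segment; assumption).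
  replace (seg_int k p w - seg_int k p z - k z * (w - z))%C with (seg_int (fun x => k x - k z)%C z w).
  2: { rewrite seg_int_minus, seg_int_const, (seg_int_chasles_ball z w) by (auto; apply seg_cont_const). ring. }
  eapply Rle_trans; [apply seg_int_bound with (M := eps / 4)|].
  - intros s Hs. apply ccont_minus; [apply Szw, Hs | apply ccont_const].
  - intros s Hs. left. apply K1.
    replace (z + RtoC s * (w - z) - z)%C with (RtoC s * (w - z))%C by ring.
    eapply Rle_lt_trans; [apply Cmod_scal_le, Hs | lra].
  - pose proof (Cmod_ge_0 (w - z)). nra.
Qed.

End BallPrimitive.

Lemma is_cderiv_zero_const F c r p :
  (forall w, in_ball c r w -> is_cderiv F w (RtoC 0)) -> in_ball c r p -> F p = F c.
Proof.
  intros H Hp.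
  assert (Hc : in_ball c r c) by (unfold in_ball; replace (c - c)%C with (RtoC 0) by ring; rewrite Cmod_0;
                                 unfold in_ball in Hp; pose proof (Cmod_ge_0 (p - c)); lra).
  assert (E := seg_int_primitive F (fun _ => RtoC 0) c p).
  rewrite seg_int_const in E. apply Ceq_minus. rewrite <- E; [ring| |apply seg_cont_const].
  intros s Hs. apply H, in_ball_segment; assumption.
Qed.

(** * The Cauchy integral formula *)

Definition cis (t : R) : C := (cos t, sin t).
Definition circle (c : C) (r t : R) : C := (c + RtoC r * cis t)%C.
Definition circle_deriv (r t : R) : C := (Ci * RtoC r * cis t)%C.

Lemma Cmod_cis t : Cmod (cis t) = 1.
Proof.
  unfold Cmod, cis. simpl.
  replace (cos t * (cos t * 1) + sin t * (sin t * 1)) with (Rsqr (sin t) + Rsqr (cos t)) by (unfold Rsqr; ring).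
  rewrite sin2_cos2. apply sqrt_1.
Qed.

Lemma is_rderiv_cis t : is_rderiv cis t (Ci * cis t)%C.
Proof.
  apply is_rderiv_of_Re_Im; simpl.
  - replace (0 * cos t - 1 * sin t) with (- sin t) by ring. apply derivable_pt_lim_cos.
  - replace (0 * sin t + 1 * cos t) with (cos t) by ring. apply derivable_pt_lim_sin.
Qed.

Lemma is_rderiv_affine_comp F t l (c k : C) : is_rderiv F t l -> is_rderiv (fun s => (c + k * F s)%C) t (k * l)%C.
Proof.
  intros H eps He. pose proof (Cmod_ge_0 k).
  destruct (H (eps / (Cmod k + 1))) as [d [Hd K]]; [apply Rdiv_lt_0_compat; lra|].
  exists d. split; [exact Hd|]. intros h Hh. specialize (K h Hh).
  replace (c + k * F (t + h)%R - (c + k * F t) - RtoC h * (k * l))%C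
    with (k * (F (t + h)%R - F t - RtoC h * l))%C by ring.
  rewrite Cmod_mult. pose proof (Rabs_pos h).
  apply Rle_trans with (Cmod k * (eps / (Cmod k + 1) * Rabs h)); [apply Rmult_le_compat_l; lra|].
  assert (Cmod k * (eps / (Cmod k + 1)) <= eps)
    by (apply Rmult_le_reg_r with (Cmod k + 1); [lra | field_simplify; lra]).
  nra.
Qed.

Lemma is_rderiv_circle c r t : is_rderiv (circle c r) t (circle_deriv r t).
Proof.
  unfold circle, circle_deriv. replace (Ci * RtoC r * cis t)%C with (RtoC r * (Ci * cis t))%C by ring.
  apply is_rderiv_affine_comp, is_rderiv_cis.
Qed.

Lemma rcont_circle c r t : rcont (circle c r) t.
Proof. eapply is_rderiv_rcont, is_rderiv_circle. Qed.

Lemma rcont_circle_deriv r t : rcont (circle_deriv r) t.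
Proof. apply rcont_mult; [apply rcont_const | eapply is_rderiv_rcont, is_rderiv_cis]. Qed.

Lemma circle_2PI c r : circle c r (2 * PI) = circle c r 0.
Proof. unfold circle, cis. rewrite cos_2PI, sin_2PI, cos_0, sin_0. reflexivity. Qed.

Lemma circle_dist c r t : 0 <= r -> Cmod (circle c r t - c) = r.
Proof.
  intros H. unfold circle. replace (c + RtoC r * cis t - c)%C with (RtoC r * cis t)%C by ring.
  rewrite Cmod_mult, Cmod_R, Cmod_cis, Rabs_pos_eq by lra. ring.
Qed.

Lemma circle_far c r t p : 0 <= r -> r - Cmod (p - c) <= Cmod (circle c r t - p).
Proof.
  intros H. rewrite <- (circle_dist c r t H) at 1.
  replace (circle c r t - c)%C with ((circle c r t - p) + (p - c))%C by ring.
  pose proof (Cmod_triangle (circle c r t - p) (p - c)). lra.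
Qed.

Lemma circle_neq c r t p : 0 < r -> in_ball c r p -> (circle c r t - p)%C <> RtoC 0.
Proof.
  intros Hr Hp E. pose proof (circle_far c r t p ltac:(lra)). rewrite E, Cmod_0 in H.
  unfold in_ball in Hp. lra.
Qed.

Lemma in_ball_circle c r R0 t : 0 <= r < R0 -> in_ball c R0 (circle c r t).
Proof. intros H. unfold in_ball. rewrite circle_dist; lra. Qed.

Lemma circle_int_primitive (Phi phi : C -> C) c r :
  (forall t, is_cderiv Phi (circle c r t) (phi (circle c r t))) -> (forall t, ccont phi (circle c r t)) ->
  CRInt (fun t => phi (circle c r t) * circle_deriv r t)%C 0 (2 * PI) = RtoC 0.
Proof.
  intros HD HC. rewrite (CRInt_FTC (fun t => Phi (circle c r t))).
  - rewrite circle_2PI. ring.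
  - intros t _. apply is_rderiv_comp; [apply HD | apply is_rderiv_circle].
  - intros t _. apply rcont_mult; [apply rcont_comp; [apply rcont_circle | apply HC] | apply rcont_circle_deriv].
Qed.

Definition kernel_int (w : R -> C) (c : C) (r : R) (K : C -> C) (z : C) : C :=
  CRInt (fun t => w t * K (circle c r t - z))%C 0 (2 * PI).

Definition inv_kernel (a : C) : C := (/ a)%C.
Definition inv2_kernel (a : C) : C := (/ a * / a)%C.
Definition inv3_kernel (a : C) : C := (RtoC 2 * (/ a * / a * / a))%C.

Lemma ccont_inv a : a <> RtoC 0 -> ccont (fun w => / w)%C a.
Proof.
  intros H. replace (fun w => / w)%C with (fun w => / (w - RtoC 0))%C by (extensionality w; f_equal; ring).
  apply (is_cderiv_cont _ _ _ (is_cderiv_inv (RtoC 0) a H)).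
Qed.

Lemma ccont_inv_kernel a : a <> RtoC 0 -> ccont inv_kernel a.
Proof. apply ccont_inv. Qed.

Lemma ccont_inv2_kernel a : a <> RtoC 0 -> ccont inv2_kernel a.
Proof. intros H. apply ccont_mult; apply ccont_inv, H. Qed.

Lemma ccont_inv3_kernel a : a <> RtoC 0 -> ccont inv3_kernel a.
Proof.
  intros H. apply ccont_mult; [apply ccont_const|].
  apply ccont_mult; [apply ccont_inv2_kernel, H | apply ccont_inv, H].
Qed.

Lemma kernel_far (a dl : C) d : 0 < d -> d <= Cmod a -> Cmod dl <= d / 2 ->
  a <> RtoC 0 /\ (a - dl)%C <> RtoC 0 /\ d / 2 <= Cmod (a - dl).
Proof.
  intros Hd Ha Hdl. pose proof (Cmod_minus_ge a dl).
  split; [|split]; [intro E; rewrite E, Cmod_0 in Ha | intro E; rewrite E, Cmod_0 in H |]; lra.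
Qed.

(* [K' a] is the derivative of [z |-> K (a - z)] at [0], with a quadratic remainder that is uniform
   for [a] away from [0]; this is what differentiation under the integral sign needs. *)
Definition taylor2_bound (K K' : C -> C) : Prop :=
  forall d, 0 < d -> exists B, 0 <= B /\ forall a dl, d <= Cmod a -> Cmod dl <= d / 2 ->
    Cmod (K (a - dl)%C - K a - dl * K' a) <= B * (Cmod dl * Cmod dl).

Lemma taylor2_inv_kernel : taylor2_bound inv_kernel inv2_kernel.
Proof.
  intros d Hd. exists (2 / (d * d * d)).
  split; [apply Rdiv_le_0_compat; [lra | repeat apply Rmult_lt_0_compat; lra]|].
  intros a dl Ha Hdl. destruct (kernel_far a dl d Hd Ha Hdl) as [A0 [A1 A2]].
  unfold inv_kernel, inv2_kernel.
  replace (/ (a - dl) - / a - dl * (/ a * / a))%C with (dl * dl * (/ a * / a * / (a - dl)))%C by (field; auto).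
  rewrite !Cmod_mult, !Cmod_inv by assumption.
  pose proof (Cmod_ge_0 dl).
  assert (P : / Cmod a * / Cmod a * / Cmod (a - dl) <= 2 / (d * d * d)).
  { replace (2 / (d * d * d)) with (/ d * / d * / (d / 2)) by (field; lra).
    assert (/ Cmod a <= / d) by (apply Rinv_le_contravar; lra).
    assert (/ Cmod (a - dl) <= / (d / 2)) by (apply Rinv_le_contravar; lra).
    assert (0 <= / Cmod a) by (left; apply Rinv_0_lt_compat; lra).
    assert (0 <= / Cmod (a - dl)) by (left; apply Rinv_0_lt_compat; lra).
    apply Rmult_le_compat; [nra | lra | | lra]. apply Rmult_le_compat; lra. }
  rewrite (Rmult_comm (2 / (d * d * d))). apply Rmult_le_compat_l; [nra | exact P].
Qed.

Lemma taylor2_inv2_kernel : taylor2_bound inv2_kernel inv3_kernel.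
Proof.
  intros d Hd. exists (16 / (d * d * d * d)).
  split; [apply Rdiv_le_0_compat; [lra | repeat apply Rmult_lt_0_compat; lra]|].
  intros a dl Ha Hdl. destruct (kernel_far a dl d Hd Ha Hdl) as [A0 [A1 A2]].
  unfold inv2_kernel, inv3_kernel.
  replace (/ (a - dl) * / (a - dl) - / a * / a - dl * (RtoC 2 * (/ a * / a * / a)))%C
    with (dl * dl * ((RtoC 3 * a - RtoC 2 * dl) * (/ a * / a * / a * / (a - dl) * / (a - dl))))%C
    by (field; auto).
  rewrite !Cmod_mult, !Cmod_inv by assumption.
  pose proof (Cmod_ge_0 dl). pose proof (Cmod_ge_0 a).
  assert (N : Cmod (RtoC 3 * a - RtoC 2 * dl) <= 4 * Cmod a).
  { eapply Rle_trans; [apply Cmod_minus_le|]. rewrite !Cmod_mult, !Cmod_R, !Rabs_pos_eq by lra. lra. }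
  set (X := / Cmod a). set (Y := / Cmod (a - dl)).
  assert (HX : 0 < X) by (unfold X; apply Rinv_0_lt_compat; lra).
  assert (HY : 0 < Y <= 2 / d).
  { unfold Y. split; [apply Rinv_0_lt_compat; lra|].
    replace (2 / d) with (/ (d / 2)) by (field; lra). apply Rinv_le_contravar; lra. }
  assert (HX2 : X <= / d) by (unfold X; apply Rinv_le_contravar; lra).
  assert (HaX : Cmod a * X = 1) by (unfold X; field; lra).
  assert (Hd' : 0 <= / d) by (left; apply Rinv_0_lt_compat; lra).
  assert (Q : Cmod (RtoC 3 * a - RtoC 2 * dl) * (X * X * X * Y * Y) <= 16 / (d * d * d * d)).
  { apply Rle_trans with (4 * Cmod a * (X * X * X * Y * Y)).
    - apply Rmult_le_compat_r; [|exact N].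
      assert (0 < X * X * X * Y * Y) by (repeat apply Rmult_lt_0_compat; lra). lra.
    - replace (4 * Cmod a * (X * X * X * Y * Y)) with (4 * (Cmod a * X) * (X * X * Y * Y)) by ring. rewrite HaX.
      replace (16 / (d * d * d * d)) with (4 * 1 * (/ d * / d * (2 / d) * (2 / d))) by (field; lra).
      apply Rmult_le_compat_l; [lra|].
      apply Rmult_le_compat; try nra; apply Rmult_le_compat; try nra; apply Rmult_le_compat; nra. }
  rewrite (Rmult_comm (16 / (d * d * d * d))). apply Rmult_le_compat_l; [nra | exact Q].
Qed.

Section KernelDerivative.

Variables (w : R -> C) (c : C) (r : R) (K K' : C -> C).
Hypothesis r_pos : 0 < r.
Hypothesis w_cont : forall t, rcont w t.
Hypothesis K_cont : forall a, a <> RtoC 0 -> ccont K a.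
Hypothesis K'_cont : forall a, a <> RtoC 0 -> ccont K' a.
Hypothesis K_taylor : taylor2_bound K K'.

Lemma rcont_kernel_integrand (L : C -> C) z t :
  (forall a, a <> RtoC 0 -> ccont L a) -> (forall s, (circle c r s - z)%C <> RtoC 0) ->
  rcont (fun s => w s * L (circle c r s - z))%C t.
Proof.
  intros HL Hz. apply rcont_mult; [apply w_cont|].
  apply (rcont_comp L (fun s => circle c r s - z)%C); [|apply HL, Hz].
  apply rcont_minus; [apply rcont_circle | apply rcont_const].
Qed.

Lemma kernel_int_taylor z : in_ball c r z ->
  exists d Q, 0 < d /\ 0 <= Q /\ forall z', Cmod (z' - z) <= d ->
    Cmod (kernel_int w c r K z' - kernel_int w c r K z - kernel_int w c r K' z * (z' - z))
      <= Q * (Cmod (z' - z) * Cmod (z' - z)).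
Proof.
  intros Hz. unfold in_ball in Hz. set (dist := r - Cmod (z - c)).
  assert (Hdist : 0 < dist) by (unfold dist; lra).
  assert (Hfar : forall t z', Cmod (z' - z) <= dist / 2 -> dist / 2 <= Cmod (circle c r t - z')).
  { intros t z' Hz'. pose proof (circle_far c r t z' ltac:(lra)).
    replace (z' - c)%C with ((z' - z) + (z - c))%C in H by ring.
    pose proof (Cmod_triangle (z' - z) (z - c)). unfold dist in *. lra. }
  assert (Hne : forall z', Cmod (z' - z) <= dist / 2 -> forall t, (circle c r t - z')%C <> RtoC 0).
  { intros z' Hz' t E. specialize (Hfar t z' Hz'). rewrite E, Cmod_0 in Hfar. lra. }
  assert (Hz0 : Cmod (z - z) <= dist / 2) by (replace (z - z)%C with (RtoC 0) by ring; rewrite Cmod_0; lra).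
  assert (PIpos : 0 < 2 * PI) by (pose proof PI_RGT_0; lra).
  destruct (rcont_on_bounded w 0 (2 * PI) ltac:(lra) (fun t _ => w_cont t)) as [Mw HMw].
  assert (HMw0 : 0 <= Mw) by (eapply Rle_trans; [apply Cmod_ge_0 | apply (HMw 0); lra]).
  destruct (K_taylor dist Hdist) as [B [HB0 HB]].
  exists (dist / 2), (2 * (2 * PI - 0) * (Mw * B)). split; [lra|]. split; [apply Rmult_le_pos; nra|].
  intros z' Hz'. set (dl := (z' - z)%C) in *.
  assert (R' : forall L, (forall a, a <> RtoC 0 -> ccont L a) -> forall y, Cmod (y - z) <= dist / 2 ->
            rcont_on (fun t => w t * L (circle c r t - y))%C 0 (2 * PI))
    by (intros L HL y Hy t _; apply rcont_kernel_integrand; [exact HL | apply Hne, Hy]).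
  unfold kernel_int. rewrite (Cmult_comm _ dl).
  rewrite <- (CRInt_scal dl) by (apply R'; assumption).
  rewrite <- CRInt_minus, <- CRInt_minus by
    (try (intros t Ht; apply rcont_minus); try (intros t Ht; apply rcont_mult; [apply rcont_const|]);
     apply R'; assumption).
  replace (2 * (2 * PI - 0) * (Mw * B) * (Cmod dl * Cmod dl))
    with (2 * (2 * PI - 0) * (Mw * (B * (Cmod dl * Cmod dl)))) by ring.
  apply CRInt_bound; [lra| |].
  - intros t Ht. apply rcont_minus; [apply rcont_minus | apply rcont_mult; [apply rcont_const|]];
      apply R'; assumption.
  - intros t Ht.
    replace (w t * K (circle c r t - z') - w t * K (circle c r t - z) - dl * (w t * K' (circle c r t - z)))%C
      with (w t * (K ((circle c r t - z) - dl) - K (circle c r t - z) - dl * K' (circle c r t - z)))%C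
      by (unfold dl; replace (circle c r t - z - (z' - z))%C with (circle c r t - z')%C by ring; ring).
    rewrite Cmod_mult. apply Rmult_le_compat; try apply Cmod_ge_0; [apply HMw, Ht|].
    apply HB; [apply circle_far; lra | exact Hz'].
Qed.

Lemma is_cderiv_kernel_int z : in_ball c r z ->
  is_cderiv (kernel_int w c r K) z (kernel_int w c r K' z).
Proof.
  intros Hz eps He. destruct (kernel_int_taylor z Hz) as [d [Q [Hd [HQ HT]]]].
  exists (Rmin d (eps / (Q + 1))). split; [apply Rmin_glb_lt; [exact Hd | apply Rdiv_lt_0_compat; lra]|].
  intros z' Hz'. pose proof (Rmin_l d (eps / (Q + 1))). pose proof (Rmin_r d (eps / (Q + 1))).
  eapply Rle_trans; [apply HT; lra|]. pose proof (Cmod_ge_0 (z' - z)).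
  assert (Q * Cmod (z' - z) <= eps).
  { apply Rle_trans with (Q * (eps / (Q + 1))); [apply Rmult_le_compat_l; lra|].
    apply Rmult_le_reg_r with (Q + 1); [lra|]. field_simplify; nra. }
  nra.
Qed.

End KernelDerivative.

Lemma kernel_int_circle_deriv c r p : 0 < r -> in_ball c r p ->
  kernel_int (circle_deriv r) c r inv_kernel p = (Ci * RtoC (2 * PI - 0))%C.
Proof.
  intros Hr Hp.
  assert (Hc : in_ball c r c) by (unfold in_ball; replace (c - c)%C with (RtoC 0) by ring; rewrite Cmod_0; lra).
  assert (Hconst : forall w, in_ball c r w -> is_cderiv (kernel_int (circle_deriv r) c r inv_kernel) w (RtoC 0)).
  { intros w Hw. replace (RtoC 0) with (kernel_int (circle_deriv r) c r inv2_kernel w).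
    - apply is_cderiv_kernel_int;
        auto using rcont_circle_deriv, ccont_inv_kernel, ccont_inv2_kernel, taylor2_inv_kernel.
    - unfold kernel_int.
      rewrite <- (circle_int_primitive (fun x => - inv_kernel (x - w))%C (fun x => inv2_kernel (x - w)) c r).
      + apply CRInt_ext. intros. ring.
      + intros t. assert (Hne := circle_neq c r t w Hr Hw).
        replace (inv2_kernel (circle c r t - w)) with (- - / ((circle c r t - w) * (circle c r t - w)))%C
          by (unfold inv2_kernel; field; exact Hne).
        apply is_cderiv_opp, is_cderiv_inv. intro E. apply Hne. rewrite E. ring.
      + intros t. assert (Hne : circle c r t <> w)
          by (intro E; apply (circle_neq c r t w Hr Hw); rewrite E; ring).
        apply ccont_mult; exact (is_cderiv_cont _ _ _ (is_cderiv_inv w _ Hne)). }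
  rewrite (is_cderiv_zero_const _ c r p Hconst Hp).
  unfold kernel_int. rewrite <- CRInt_const. apply CRInt_ext. intros t _.
  unfold circle_deriv, inv_kernel, circle. replace (c + RtoC r * cis t - c)%C with (RtoC r * cis t)%C by ring.
  assert (Hcis : cis t <> RtoC 0) by (intro E; pose proof (Cmod_cis t); rewrite E, Cmod_0 in H; lra).
  assert (Hr0 : RtoC r <> RtoC 0) by (intro E; apply RtoC_inj in E; lra).
  field. auto.
Qed.

Definition diff_quotient (g : C -> C) (p lp : C) (w : C) : C :=
  if excluded_middle_informative (w = p) then lp else ((g w - g p) * inv_kernel (w - p))%C.

Section DiffQuotient.

Variables (g : C -> C) (p lp : C).
Hypothesis g_deriv_p : is_cderiv g p lp.

Lemma diff_quotient_neq w : w <> p -> diff_quotient g p lp w = ((g w - g p) * inv_kernel (w - p))%C.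
Proof. intros Hw. unfold diff_quotient. destruct excluded_middle_informative; [contradiction | reflexivity]. Qed.

Lemma is_cderiv_diff_quotient w l : w <> p -> is_cderiv g w l -> exists l', is_cderiv (diff_quotient g p lp) w l'.
Proof.
  intros Hw Hl. eexists. eapply is_cderiv_ext_near.
  - exists (Cmod (w - p)). split; [apply Cmod_gt_0; intro E; apply Hw, Ceq_minus, E|].
    intros x Hx. symmetry. apply diff_quotient_neq. intro E. subst x. rewrite Cmod_minus_sym in Hx. lra.
  - apply (is_cderiv_mult (fun x => g x - g p)%C (fun x => inv_kernel (x - p))).
    + apply is_cderiv_minus; [exact Hl | apply is_cderiv_const].
    + apply is_cderiv_inv, Hw.
Qed.

Lemma ccont_diff_quotient_at : ccont (diff_quotient g p lp) p.
Proof.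
  intros eps He. destruct (g_deriv_p (eps / 2) ltac:(lra)) as [d [Hd K]]. exists d. split; [exact Hd|].
  intros x Hx. assert (Hpp : diff_quotient g p lp p = lp)
    by (unfold diff_quotient; destruct excluded_middle_informative; [reflexivity | contradiction]).
  rewrite Hpp. destruct (excluded_middle_informative (x = p)) as [Ex|Ex].
  - subst x. rewrite Hpp. replace (lp - lp)%C with (RtoC 0) by ring. rewrite Cmod_0. lra.
  - rewrite diff_quotient_neq by exact Ex. specialize (K x Hx).
    assert (Hxp : (x - p)%C <> RtoC 0) by (intro E0; apply Ex, Ceq_minus, E0).
    replace ((g x - g p) * inv_kernel (x - p) - lp)%C with ((g x - g p - lp * (x - p)) * / (x - p))%C
      by (unfold inv_kernel; field; exact Hxp).
    rewrite Cmod_mult, Cmod_inv by exact Hxp.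
    assert (0 < Cmod (x - p)) by (apply Cmod_gt_0, Hxp).
    apply Rle_lt_trans with (eps / 2 * Cmod (x - p) * / Cmod (x - p)).
    + apply Rmult_le_compat_r; [left; apply Rinv_0_lt_compat; lra | exact K].
    + replace (eps / 2 * Cmod (x - p) * / Cmod (x - p)) with (eps / 2) by (field; lra). lra.
Qed.

End DiffQuotient.

Definition circle_weight (g : C -> C) (c : C) (r t : R) : C := (g (circle c r t) * circle_deriv r t)%C.

(* Integrating the difference quotient, which has a primitive on the ball, around the circle gives zero. *)
Theorem cauchy_formula g c r R0 p : 0 < r < R0 ->
  (forall w, in_ball c R0 w -> exists l, is_cderiv g w l) -> in_ball c r p ->
  kernel_int (circle_weight g c r) c r inv_kernel p = (g p * (Ci * RtoC (2 * PI - 0)))%C.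
Proof.
  intros Hr Hg Hp.
  assert (HpR : in_ball c R0 p) by (unfold in_ball in *; lra).
  destruct (Hg p HpR) as [lp Hlp].
  set (phi := diff_quotient g p lp).
  assert (Hd : forall w, in_ball c R0 w -> w <> p -> exists l, is_cderiv phi w l).
  { intros w Hw Hne. destruct (Hg w Hw) as [lw Hlw]. exact (is_cderiv_diff_quotient g p lp w lw Hne Hlw). }
  assert (Hc : forall w, in_ball c R0 w -> ccont phi w).
  { intros w Hw. destruct (excluded_middle_informative (w = p)) as [E|E].
    - subst w. apply ccont_diff_quotient_at, Hlp.
    - destruct (Hd w Hw E) as [l Hl]. exact (is_cderiv_cont _ _ _ Hl). }
  assert (HR : forall t, in_ball c R0 (circle c r t)) by (intros t; apply in_ball_circle; lra).
  assert (Hne : forall t, circle c r t <> p)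
    by (intros t E; apply (circle_neq c r t p ltac:(lra) Hp); rewrite E; ring).
  assert (Z := circle_int_primitive (fun w => seg_int phi p w) phi c r
    (fun t => is_cderiv_seg_int phi c p R0 HpR Hc Hd _ (HR t)) (fun t => Hc _ (HR t))).
  assert (Hw : forall t, rcont (circle_weight g c r) t).
  { intros t. apply rcont_mult; [apply rcont_comp; [apply rcont_circle|] | apply rcont_circle_deriv].
    destruct (Hg _ (HR t)) as [l Hl]. exact (is_cderiv_cont _ _ _ Hl). }
  assert (Hne' : forall t, (circle c r t - p)%C <> RtoC 0) by (intros t; apply circle_neq; [lra | exact Hp]).
  rewrite (CRInt_ext _ (fun t => circle_weight g c r t * inv_kernel (circle c r t - p) -
                                 g p * (circle_deriv r t * inv_kernel (circle c r t - p)))%C) in Z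
    by (intros t _; unfold phi; rewrite diff_quotient_neq by apply Hne; unfold circle_weight; ring).
  rewrite CRInt_minus, CRInt_scal in Z
    by (intros t _; first
          [ apply rcont_kernel_integrand; auto using rcont_circle_deriv, ccont_inv_kernel
          | apply rcont_mult; [apply rcont_const|];
            apply rcont_kernel_integrand; auto using rcont_circle_deriv, ccont_inv_kernel ]).
  fold (kernel_int (circle_weight g c r) c r inv_kernel p) (kernel_int (circle_deriv r) c r inv_kernel p) in Z.
  rewrite kernel_int_circle_deriv in Z by (lra || exact Hp).
  apply Ceq_minus, Z.
Qed.

(* Cauchy's formula writes [g] near [z] as a kernel integral, which can be differentiated twice. *)
Theorem holo_ball_cderiv g c0 R0 : (forall w, in_ball c0 R0 w -> exists l, is_cderiv g w l) ->
  forall z, in_ball c0 R0 z -> exists l, is_cderiv (cderiv g) z l.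
Proof.
  intros Hg z Hz. unfold in_ball in Hz.
  set (rho := R0 - Cmod (z - c0)). set (r := rho / 2).
  assert (Hrho : 0 < rho) by (unfold rho; lra).
  assert (Hr : 0 < r < rho) by (unfold r; lra).
  assert (Hg' : forall w, in_ball z rho w -> exists l, is_cderiv g w l).
  { intros w Hw. apply Hg. unfold in_ball in *. replace (w - c0)%C with ((w - z) + (z - c0))%C by ring.
    eapply Rle_lt_trans; [apply Cmod_triangle | unfold rho in Hw; lra]. }
  set (I := (Ci * RtoC (2 * PI - 0))%C).
  assert (HI : I <> RtoC 0).
  { unfold I. apply Cmult_neq_0; [apply Ci_nz|]. intro E. apply RtoC_inj in E. pose proof PI_RGT_0. lra. }
  set (om := circle_weight g z r).
  assert (Rom : forall t, rcont om t).
  { intros t. apply rcont_mult; [apply rcont_comp; [apply rcont_circle|] | apply rcont_circle_deriv].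
    destruct (Hg' (circle z r t) (in_ball_circle z r rho t ltac:(lra))) as [l Hl]. exact (is_cderiv_cont _ _ _ Hl). }
  assert (Eg : forall w, in_ball z r w -> g w = (/ I * kernel_int om z r inv_kernel w)%C).
  { intros w Hw. unfold om. rewrite (cauchy_formula g z r rho w Hr Hg' Hw). fold I. field. exact HI. }
  assert (Dg : forall w, in_ball z r w -> cderiv g w = (/ I * kernel_int om z r inv2_kernel w)%C).
  { intros w Hw. apply cderiv_is_cderiv.
    apply (is_cderiv_ext_near (fun x => / I * kernel_int om z r inv_kernel x)%C).
    - apply (near_mono w (in_ball z r)); [intros x Hx; symmetry; apply Eg, Hx | apply in_ball_near, Hw].
    - apply is_cderiv_scal, is_cderiv_kernel_int;
        auto using ccont_inv_kernel, ccont_inv2_kernel, taylor2_inv_kernel; lra. }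
  assert (Hz0 : in_ball z r z) by (unfold in_ball; replace (z - z)%C with (RtoC 0) by ring; rewrite Cmod_0; lra).
  exists (/ I * kernel_int om z r inv3_kernel z)%C.
  apply (is_cderiv_ext_near (fun x => / I * kernel_int om z r inv2_kernel x)%C).
  - apply (near_mono z (in_ball z r)); [intros x Hx; symmetry; apply Dg, Hx | apply in_ball_near, Hz0].
  - apply is_cderiv_scal, is_cderiv_kernel_int;
      auto using ccont_inv2_kernel, ccont_inv3_kernel, taylor2_inv2_kernel; lra.
Qed.

(** * The operators [T_g] and [S_g] *)

Lemma in_disc_ball z : in_disc z -> in_ball (RtoC 0) 1 z.
Proof. unfold in_disc, in_ball. replace (z - RtoC 0)%C with z by ring. tauto. Qed.

Lemma in_ball_disc z : in_ball (RtoC 0) 1 z -> in_disc z.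
Proof. unfold in_disc, in_ball. replace (z - RtoC 0)%C with z by ring. tauto. Qed.

Lemma holo_disc_is_cderiv f : holo_disc f <-> forall z, in_disc z -> exists l, is_cderiv f z l.
Proof. unfold holo_disc. split; intros H z Hz; apply cdiff_is_cderiv, H, Hz. Qed.

Lemma is_cderiv_cderiv f z : holo_disc f -> in_disc z -> is_cderiv f z (cderiv f z).
Proof.
  intros H Hz. destruct (proj1 (holo_disc_is_cderiv f) H z Hz) as [l Hl].
  rewrite (cderiv_is_cderiv f z l Hl). exact Hl.
Qed.

Lemma holo_disc_ccont f z : holo_disc f -> in_disc z -> ccont f z.
Proof. intros H Hz. exact (is_cderiv_cont _ _ _ (is_cderiv_cderiv f z H Hz)). Qed.

Lemma holo_disc_cderiv f : holo_disc f -> holo_disc (cderiv f).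
Proof.
  rewrite !holo_disc_is_cderiv. intros H z Hz. apply (holo_ball_cderiv f (RtoC 0) 1).
  - intros w Hw. apply H, in_ball_disc, Hw.
  - apply in_disc_ball, Hz.
Qed.

Lemma holo_disc_plus F G : holo_disc F -> holo_disc G -> holo_disc (fun w => F w + G w)%C.
Proof.
  rewrite !holo_disc_is_cderiv. intros HF HG z Hz.
  destruct (HF z Hz) as [a Ha], (HG z Hz) as [b Hb]. eexists. apply is_cderiv_plus; eassumption.
Qed.

Lemma holo_disc_scal c F : holo_disc F -> holo_disc (fun w => c * F w)%C.
Proof.
  rewrite !holo_disc_is_cderiv. intros HF z Hz. destruct (HF z Hz) as [a Ha].
  eexists. apply is_cderiv_scal, Ha.
Qed.

Lemma holo_disc_const c : holo_disc (fun _ => c).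
Proof. apply holo_disc_is_cderiv. intros z _. eexists. apply is_cderiv_const. Qed.

Definition eq_on_disc (F G : C -> C) : Prop := forall z, in_disc z -> F z = G z.

Lemma eq_on_disc_deriv F G dF dG :
  (forall z, in_disc z -> is_cderiv F z (dF z)) -> (forall z, in_disc z -> is_cderiv G z (dG z)) ->
  eq_on_disc dF dG -> F (RtoC 0) = G (RtoC 0) -> eq_on_disc F G.
Proof.
  intros HF HG Hd H0 z Hz.
  assert (E : (F z - G z)%C = (F (RtoC 0) - G (RtoC 0))%C).
  { apply (is_cderiv_zero_const (fun w => F w - G w)%C (RtoC 0) 1 z); [|apply in_disc_ball, Hz].
    intros w Hw. apply in_ball_disc in Hw.
    replace (RtoC 0) with (dF w - dG w)%C by (rewrite Hd by exact Hw; ring).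
    apply is_cderiv_minus; auto. }
  rewrite H0 in E. apply Ceq_minus. rewrite E. ring.
Qed.

Lemma cderiv_eq_on_disc X Y : eq_on_disc X Y -> eq_on_disc (cderiv X) (cderiv Y).
Proof.
  intros H z Hz.
  assert (Hn : near z (fun w => X w = Y w)).
  { apply (near_mono z (in_ball (RtoC 0) 1)); [intros w Hw; apply H, in_ball_disc, Hw|].
    apply in_ball_near, in_disc_ball, Hz. }
  destruct (excluded_middle_informative (cdiff X z)) as [D|D].
  - apply cdiff_is_cderiv in D. destruct D as [l Hl].
    rewrite (cderiv_is_cderiv X z l Hl). symmetry. apply cderiv_is_cderiv. eapply is_cderiv_ext_near; eassumption.
  - assert (D' : ~ cdiff Y z).
    { intros D'. apply D. apply cdiff_is_cderiv in D'. destruct D' as [l Hl]. apply cdiff_is_cderiv. exists l.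
      eapply is_cderiv_ext_near; [|exact Hl]. apply (near_mono z _ _ (fun w E => eq_sym E) Hn). }
    unfold cderiv. destruct excluded_middle_informative; [contradiction|].
    destruct excluded_middle_informative; [contradiction | reflexivity].
Qed.

Section Operators.

Lemma cint0_seg_int k z : cint0 k z = seg_int k (RtoC 0) z.
Proof.
  unfold cint0, seg_int, CRInt. replace (z - RtoC 0)%C with z by ring.
  f_equal. f_equal; apply RInt_ext; intros; do 2 f_equal; ring.
Qed.

Lemma cint0_0 k : cint0 k (RtoC 0) = RtoC 0.
Proof. unfold cint0. ring. Qed.

Lemma is_cderiv_cint0 k z : holo_disc k -> in_disc z -> is_cderiv (cint0 k) z (k z).
Proof.
  intros Hk Hz.
  replace (cint0 k) with (fun w => seg_int k (RtoC 0) w) by (extensionality w; symmetry; apply cint0_seg_int).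
  apply (is_cderiv_seg_int k (RtoC 0) (RtoC 0) 1).
  - unfold in_ball. replace (RtoC 0 - RtoC 0)%C with (RtoC 0) by ring. rewrite Cmod_0. lra.
  - intros w Hw. apply holo_disc_ccont; [exact Hk | apply in_ball_disc, Hw].
  - intros w Hw _. apply (proj1 (holo_disc_is_cderiv k) Hk), in_ball_disc, Hw.
  - apply in_disc_ball, Hz.
Qed.

Lemma cint0_eq_on_disc k1 k2 : eq_on_disc k1 k2 -> eq_on_disc (cint0 k1) (cint0 k2).
Proof.
  intros H z Hz.
  assert (Hs : forall x, 0 <= x <= 1 -> in_disc (RtoC x * z)%C).
  { intros x Hx. unfold in_disc in *. eapply Rle_lt_trans; [apply Cmod_scal_le, Hx | exact Hz]. }
  unfold cint0. f_equal. f_equal; apply RInt_ext; intros x Hx;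
    rewrite Rmin_left, Rmax_right in Hx by lra; rewrite (H _ (Hs x ltac:(lra))); reflexivity.
Qed.

Variable g : C -> C.
Hypothesis g_holo : holo_disc g.

Lemma is_cderiv_Tg X z : holo_disc X -> in_disc z -> is_cderiv (Tg g X) z (X z * cderiv g z)%C.
Proof.
  intros HX Hz. apply (is_cderiv_cint0 (fun w => X w * cderiv g w)%C); [|exact Hz].
  apply holo_disc_is_cderiv. intros w Hw. eexists.
  apply is_cderiv_mult; apply is_cderiv_cderiv; auto using holo_disc_cderiv.
Qed.

Lemma is_cderiv_Sg X z : holo_disc X -> in_disc z -> is_cderiv (Sg g X) z (cderiv X z * g z)%C.
Proof.
  intros HX Hz. apply (is_cderiv_cint0 (fun w => cderiv X w * g w)%C); [|exact Hz].
  apply holo_disc_is_cderiv. intros w Hw. eexists.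
  apply is_cderiv_mult; apply is_cderiv_cderiv; auto using holo_disc_cderiv.
Qed.

Lemma holo_disc_Tg X : holo_disc X -> holo_disc (Tg g X).
Proof. intros HX. apply holo_disc_is_cderiv. intros z Hz. eexists. apply is_cderiv_Tg; assumption. Qed.

Lemma holo_disc_Sg X : holo_disc X -> holo_disc (Sg g X).
Proof. intros HX. apply holo_disc_is_cderiv. intros z Hz. eexists. apply is_cderiv_Sg; assumption. Qed.

Lemma Tg_0 X : Tg g X (RtoC 0) = RtoC 0.
Proof. apply cint0_0. Qed.

Lemma Sg_0 X : Sg g X (RtoC 0) = RtoC 0.
Proof. apply cint0_0. Qed.

Lemma Tg_eq_on_disc X Y : eq_on_disc X Y -> eq_on_disc (Tg g X) (Tg g Y).
Proof. intros H. apply cint0_eq_on_disc. intros z Hz. rewrite H by exact Hz. reflexivity. Qed.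

Lemma Sg_eq_on_disc X Y : eq_on_disc X Y -> eq_on_disc (Sg g X) (Sg g Y).
Proof. intros H. apply cint0_eq_on_disc. intros z Hz. rewrite (cderiv_eq_on_disc X Y H z Hz). reflexivity. Qed.

Lemma Tg_plus X Y : holo_disc X -> holo_disc Y ->
  eq_on_disc (Tg g (fun w => X w + Y w)%C) (fun z => Tg g X z + Tg g Y z)%C.
Proof.
  intros HX HY. apply (eq_on_disc_deriv _ _ (fun z => (X z + Y z) * cderiv g z)%C
                                            (fun z => X z * cderiv g z + Y z * cderiv g z)%C).
  - intros z Hz. apply (is_cderiv_Tg (fun w => X w + Y w)%C); [apply holo_disc_plus |]; assumption.
  - intros z Hz. apply is_cderiv_plus; apply is_cderiv_Tg; assumption.
  - intros z _. ring.
  - rewrite !Tg_0. ring.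
Qed.

Lemma Tg_scal c X : holo_disc X -> eq_on_disc (Tg g (fun w => c * X w)%C) (fun z => c * Tg g X z)%C.
Proof.
  intros HX. apply (eq_on_disc_deriv _ _ (fun z => (c * X z) * cderiv g z)%C (fun z => c * (X z * cderiv g z))%C).
  - intros z Hz. apply (is_cderiv_Tg (fun w => c * X w)%C); [apply holo_disc_scal |]; assumption.
  - intros z Hz. apply is_cderiv_scal, is_cderiv_Tg; assumption.
  - intros z _. ring.
  - rewrite !Tg_0. ring.
Qed.

Lemma Sg_plus X Y : holo_disc X -> holo_disc Y ->
  eq_on_disc (Sg g (fun w => X w + Y w)%C) (fun z => Sg g X z + Sg g Y z)%C.
Proof.
  intros HX HY. apply (eq_on_disc_deriv _ _ (fun z => cderiv (fun w => X w + Y w)%C z * g z)%C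
                                            (fun z => cderiv X z * g z + cderiv Y z * g z)%C).
  - intros z Hz. apply (is_cderiv_Sg (fun w => X w + Y w)%C); [apply holo_disc_plus |]; assumption.
  - intros z Hz. apply is_cderiv_plus; apply is_cderiv_Sg; assumption.
  - intros z Hz. rewrite (cderiv_is_cderiv _ z (cderiv X z + cderiv Y z)%C); [ring|].
    apply is_cderiv_plus; apply is_cderiv_cderiv; assumption.
  - rewrite !Sg_0. ring.
Qed.

Lemma Sg_scal c X : holo_disc X -> eq_on_disc (Sg g (fun w => c * X w)%C) (fun z => c * Sg g X z)%C.
Proof.
  intros HX. apply (eq_on_disc_deriv _ _ (fun z => cderiv (fun w => c * X w)%C z * g z)%C
                                         (fun z => c * (cderiv X z * g z))%C).
  - intros z Hz. apply (is_cderiv_Sg (fun w => c * X w)%C); [apply holo_disc_scal |]; assumption.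
  - intros z Hz. apply is_cderiv_scal, is_cderiv_Sg; assumption.
  - intros z Hz. rewrite (cderiv_is_cderiv _ z (c * cderiv X z)%C); [ring|].
    apply is_cderiv_scal, is_cderiv_cderiv; assumption.
  - rewrite !Sg_0. ring.
Qed.

Lemma Tg_zero : eq_on_disc (Tg g (fun _ => RtoC 0)) (fun _ => RtoC 0).
Proof.
  apply (eq_on_disc_deriv _ _ (fun z => RtoC 0 * cderiv g z)%C (fun _ => RtoC 0)).
  - intros z Hz. apply (is_cderiv_Tg (fun _ => RtoC 0)); [apply holo_disc_const | exact Hz].
  - intros z _. apply is_cderiv_const.
  - intros z _. ring.
  - apply Tg_0.
Qed.

Lemma Sg_zero : eq_on_disc (Sg g (fun _ => RtoC 0)) (fun _ => RtoC 0).
Proof.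
  apply (eq_on_disc_deriv _ _ (fun z => cderiv (fun _ => RtoC 0) z * g z)%C (fun _ => RtoC 0)).
  - intros z Hz. apply (is_cderiv_Sg (fun _ => RtoC 0)); [apply holo_disc_const | exact Hz].
  - intros z _. apply is_cderiv_const.
  - intros z _. rewrite (cderiv_is_cderiv (fun _ => RtoC 0) z (RtoC 0)) by apply is_cderiv_const. ring.
  - apply Sg_0.
Qed.

Lemma Tg_Sg h : holo_disc h -> h (RtoC 0) = RtoC 0 ->
  eq_on_disc (Tg g (Sg g h)) (fun z => Sg g (Tg g h) z - Tg g (Tg g h) z)%C.
Proof.
  intros Hh H0.
  assert (E : eq_on_disc (Sg g h) (fun z => h z * g z - Tg g h z)%C).
  { apply (eq_on_disc_deriv _ _ (fun z => cderiv h z * g z)%C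
                               (fun z => (cderiv h z * g z + h z * cderiv g z) - h z * cderiv g z)%C).
    - intros z Hz. apply is_cderiv_Sg; assumption.
    - intros z Hz.
      apply is_cderiv_minus; [apply is_cderiv_mult; apply is_cderiv_cderiv | apply is_cderiv_Tg]; assumption.
    - intros z _. ring.
    - rewrite Sg_0, Tg_0, H0. ring. }
  apply (eq_on_disc_deriv _ _ (fun z => Sg g h z * cderiv g z)%C
                              (fun z => cderiv (Tg g h) z * g z - Tg g h z * cderiv g z)%C).
  - intros z Hz. apply is_cderiv_Tg; [apply holo_disc_Sg |]; assumption.
  - intros z Hz. apply is_cderiv_minus; [apply is_cderiv_Sg | apply is_cderiv_Tg]; auto using holo_disc_Tg.
  - intros z Hz. rewrite E by exact Hz. rewrite (cderiv_is_cderiv _ _ _ (is_cderiv_Tg h z Hh Hz)). ring.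
  - rewrite !Tg_0, Sg_0. ring.
Qed.

End Operators.

(** * Normal forms of words *)

Fixpoint csum (F : nat -> C) (N : nat) : C :=
  match N with O => RtoC 0 | S N' => (csum F N' + F N')%C end.

Lemma csum_ext F G N : (forall k, (k < N)%nat -> F k = G k) -> csum F N = csum G N.
Proof.
  induction N; intros H; simpl; [reflexivity|].
  rewrite IHN by (intros; apply H; lia). rewrite H by lia. reflexivity.
Qed.

Lemma csum_plus F G N : csum (fun k => F k + G k)%C N = (csum F N + csum G N)%C.
Proof. induction N; simpl; [ring|]. rewrite IHN. ring. Qed.

Lemma csum_scal c F N : csum (fun k => c * F k)%C N = (c * csum F N)%C.
Proof. induction N; simpl; [ring|]. rewrite IHN. ring. Qed.

Lemma csum_zero F N : (forall k, (k < N)%nat -> F k = RtoC 0) -> csum F N = RtoC 0.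
Proof.
  induction N; intros H; simpl; [reflexivity|].
  rewrite IHN by (intros; apply H; lia). rewrite H by lia. ring.
Qed.

Lemma csum_add F N M : csum F (N + M) = (csum F N + csum (fun i => F (N + i)%nat) M)%C.
Proof. induction M; simpl; [rewrite Nat.add_0_r; ring|]. rewrite Nat.add_succ_r. simpl. rewrite IHM. ring. Qed.

Lemma csum_S_first F N : csum F (S N) = (F O + csum (fun i => F (S i)) N)%C.
Proof. change (S N) with (1 + N)%nat. rewrite csum_add. simpl. ring. Qed.

Lemma fold_right_seq_csum (F : nat -> C) s m :
  fold_right Cplus (RtoC 0) (map F (seq s m)) = csum (fun i => F (s + i)%nat) m.
Proof.
  revert s. induction m; intros s; [reflexivity|]. rewrite csum_S_first, Nat.add_0_r. simpl. rewrite IHm.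
  f_equal. apply csum_ext. intros. f_equal. lia.
Qed.

Definition normal_word (g f : C -> C) (a b : nat) : C -> C := op_pow (Sg g) a (op_pow (Tg g) b f).

Definition normal_comb (g f : C -> C) (m n : nat) (e : nat -> Z) : C -> C :=
  fun z => csum (fun k => RtoC (IZR (e k)) * normal_word g f (m - k) (n + k) z)%C (S m).

Definition has_normal_form (m n : nat) (c : Z) (W : (C -> C) -> (C -> C) -> C -> C) : Prop :=
  exists e : nat -> Z, e O = c /\
    forall g f, holo_disc g -> holo_disc f -> eq_on_disc (W g f) (normal_comb g f m n e).

Lemma holo_disc_normal_word g f a b : holo_disc g -> holo_disc f -> holo_disc (normal_word g f a b).
Proof.
  intros Hg Hf. unfold normal_word. induction a; simpl; [|apply holo_disc_Sg; assumption].
  induction b; simpl; [exact Hf | apply holo_disc_Tg; assumption].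
Qed.

Lemma normal_word_0 g f a b : (1 <= a + b)%nat -> normal_word g f a b (RtoC 0) = RtoC 0.
Proof.
  intros H. unfold normal_word. destruct a; simpl; [|apply Sg_0].
  destruct b; [lia|]. apply Tg_0.
Qed.

Lemma holo_disc_csum (c : nat -> C) (F : nat -> C -> C) N :
  (forall k, holo_disc (F k)) -> holo_disc (fun z => csum (fun k => c k * F k z)%C N).
Proof.
  intros H. induction N; simpl; [apply holo_disc_const|].
  apply holo_disc_plus; [exact IHN | apply holo_disc_scal, H].
Qed.

Lemma Tg_csum g (c : nat -> C) (F : nat -> C -> C) N : holo_disc g -> (forall k, holo_disc (F k)) ->
  eq_on_disc (Tg g (fun z => csum (fun k => c k * F k z)%C N)) (fun z => csum (fun k => c k * Tg g (F k) z)%C N).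
Proof.
  intros Hg HF. induction N; simpl; [apply Tg_zero, Hg|].
  intros z Hz. rewrite Tg_plus, IHN, Tg_scal; auto using holo_disc_csum, holo_disc_scal.
Qed.

Lemma Sg_csum g (c : nat -> C) (F : nat -> C -> C) N : holo_disc g -> (forall k, holo_disc (F k)) ->
  eq_on_disc (Sg g (fun z => csum (fun k => c k * F k z)%C N)) (fun z => csum (fun k => c k * Sg g (F k) z)%C N).
Proof.
  intros Hg HF. induction N; simpl; [apply Sg_zero, Hg|].
  intros z Hz. rewrite Sg_plus, IHN, Sg_scal; auto using holo_disc_csum, holo_disc_scal.
Qed.

Lemma has_normal_form_ext m n c W W' : has_normal_form m n c W ->
  (forall g f, holo_disc g -> holo_disc f -> eq_on_disc (W' g f) (W g f)) -> has_normal_form m n c W'.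
Proof.
  intros [e [He H]] H'. exists e. split; [exact He|].
  intros g f Hg Hf z Hz. rewrite H' by assumption. apply H; assumption.
Qed.

Lemma has_normal_form_plus m n c1 c2 W1 W2 : has_normal_form m n c1 W1 -> has_normal_form m n c2 W2 ->
  has_normal_form m n (c1 + c2)%Z (fun g f z => W1 g f z + W2 g f z)%C.
Proof.
  intros [e1 [He1 H1]] [e2 [He2 H2]]. exists (fun k => e1 k + e2 k)%Z. split; [rewrite He1, He2; reflexivity|].
  intros g f Hg Hf z Hz. rewrite H1, H2 by assumption. unfold normal_comb.
  rewrite <- csum_plus. apply csum_ext. intros k _. rewrite plus_IZR, RtoC_plus. ring.
Qed.

Lemma has_normal_form_scal m n a c W : has_normal_form m n c W ->
  has_normal_form m n (a * c)%Z (fun g f z => RtoC (IZR a) * W g f z)%C.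
Proof.
  intros [e [He H]]. exists (fun k => a * e k)%Z. split; [rewrite He; reflexivity|].
  intros g f Hg Hf z Hz. rewrite H by assumption. unfold normal_comb.
  rewrite <- csum_scal. apply csum_ext. intros k _. rewrite mult_IZR, RtoC_mult. ring.
Qed.

Lemma has_normal_form_zero m n : has_normal_form m n 0%Z (fun _ _ _ => RtoC 0).
Proof.
  exists (fun _ => 0%Z). split; [reflexivity|]. intros g f Hg Hf z Hz. unfold normal_comb.
  symmetry. apply csum_zero. intros. simpl. ring.
Qed.

Lemma has_normal_form_shift m n s c W : (s <= m)%nat -> has_normal_form (m - s) (n + s) c W ->
  has_normal_form m n (if Nat.eqb s 0 then c else 0%Z) W.
Proof.
  intros Hs [e [He H]]. exists (fun k => if Nat.leb s k then e (k - s)%nat else 0%Z). split.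
  { destruct s; simpl; [rewrite He|]; reflexivity. }
  intros g f Hg Hf z Hz. rewrite H by assumption. unfold normal_comb.
  replace (S m) with (s + S (m - s))%nat by lia. rewrite csum_add.
  rewrite (csum_zero _ s), Cplus_0_l.
  - apply csum_ext. intros i Hi.
    replace (Nat.leb s (s + i)) with true by (symmetry; apply Nat.leb_le; lia).
    replace (s + i - s)%nat with i by lia. f_equal. f_equal; lia.
  - intros k Hk. replace (Nat.leb s k) with false by (symmetry; apply Nat.leb_gt; lia). simpl. ring.
Qed.

Lemma has_normal_form_Sg m n c W : has_normal_form m n c W -> has_normal_form (S m) n c (fun g f => Sg g (W g f)).
Proof.
  intros [e [He H]]. exists (fun k => if Nat.leb k m then e k else 0%Z). split; [exact He|].
  intros g f Hg Hf z Hz. rewrite (Sg_eq_on_disc g (W g f) _ (H g f Hg Hf) z Hz).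
  unfold normal_comb. rewrite Sg_csum by auto using holo_disc_normal_word.
  change (csum ?F (S (S m))) with (csum F (S m) + F (S m))%C. cbv beta.
  replace (Nat.leb (S m) m) with false by (symmetry; apply Nat.leb_gt; lia). simpl IZR.
  rewrite Cmult_0_l, Cplus_0_r. apply csum_ext. intros k Hk.
  replace (Nat.leb k m) with true by (symmetry; apply Nat.leb_le; lia). f_equal.
  unfold normal_word. replace (S m - k)%nat with (S (m - k)) by lia. reflexivity.
Qed.

Lemma has_normal_form_Tg m n c W :
  (forall k, (k <= m)%nat ->
     has_normal_form (m - k) (S (n + k)) 1%Z (fun g f => Tg g (normal_word g f (m - k) (n + k)))) ->
  has_normal_form m n c W -> has_normal_form m (S n) c (fun g f => Tg g (W g f)).
Proof.
  intros HT [e [He H]].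
  assert (P : forall N, (N <= S m)%nat -> has_normal_form m (S n) (if Nat.eqb N 0 then 0%Z else e O)
     (fun g f z => csum (fun k => RtoC (IZR (e k)) * Tg g (normal_word g f (m - k) (n + k)) z)%C N)).
  { induction N; intros HN; [apply has_normal_form_zero|].
    assert (Hk := HT N ltac:(lia)). replace (S (n + N)) with (S n + N)%nat in Hk by lia.
    apply has_normal_form_shift in Hk; [|lia]. apply (has_normal_form_scal _ _ (e N)) in Hk.
    replace (if Nat.eqb (S N) 0 then 0%Z else e O)
      with ((if Nat.eqb N 0 then 0%Z else e O) + e N * (if Nat.eqb N 0 then 1 else 0))%Z
      by (destruct N; simpl; lia).
    exact (has_normal_form_plus _ _ _ _ _ _ (IHN ltac:(lia)) Hk). }
  specialize (P (S m) ltac:(lia)). simpl in P. rewrite He in P.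
  eapply has_normal_form_ext; [exact P|]. intros g f Hg Hf z Hz.
  rewrite (Tg_eq_on_disc g (W g f) _ (H g f Hg Hf) z Hz).
  unfold normal_comb. rewrite Tg_csum by auto using holo_disc_normal_word. reflexivity.
Qed.

(* Induction on the number of [S] letters, using [T S = S T - T T] on functions vanishing at 0. *)
Lemma Tg_normal_word a b : (1 <= b)%nat ->
  has_normal_form a (S b) 1%Z (fun g f => Tg g (normal_word g f a b)).
Proof.
  revert b. induction a as [a IH] using lt_wf_ind. intros b Hb. destruct a as [|a].
  { exists (fun _ => 1%Z). split; [reflexivity|]. intros g f Hg Hf z Hz.
    unfold normal_comb, normal_word. simpl. rewrite Nat.add_0_r. ring. }
  set (h := fun g f => normal_word g f a b).
  assert (H1 : has_normal_form a (S b) 1%Z (fun g f => Tg g (h g f))) by (apply IH; lia).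
  assert (H2 : has_normal_form (S a) (S b) 1%Z (fun g f => Sg g (Tg g (h g f)))) by (apply has_normal_form_Sg, H1).
  assert (H3 : has_normal_form (S a) (S b) 0%Z (fun g f => Tg g (Tg g (h g f)))).
  { apply (has_normal_form_shift (S a) (S b) 1 1%Z); [lia|].
    replace (S a - 1)%nat with a by lia. replace (S b + 1)%nat with (S (S b)) by lia.
    apply has_normal_form_Tg; [|exact H1]. intros k Hk. apply IH; lia. }
  eapply has_normal_form_ext; [exact (has_normal_form_plus _ _ _ _ _ _ H2 (has_normal_form_scal _ _ (-1) _ _ H3))|].
  intros g f Hg Hf z Hz. unfold normal_word at 1. simpl. fold (normal_word g f a b). fold (h g f).
  rewrite Tg_Sg; [| exact Hg | unfold h; apply holo_disc_normal_word; assumption |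
                  unfold h; apply normal_word_0; lia | exact Hz].
  rewrite RtoC_IZR_opp1. ring.
Qed.

Lemma count_T_cons b l : count_T (b :: l) = ((if b then 1 else 0) + count_T l)%nat.
Proof. destruct b; reflexivity. Qed.

Lemma count_S_cons b l : count_S (b :: l) = ((if b then 0 else 1) + count_S l)%nat.
Proof. destruct b; reflexivity. Qed.

Lemma last_true_count_T l : last l false = true -> (1 <= count_T l)%nat.
Proof.
  induction l as [|x l IH]; simpl; intros H; [discriminate|].
  rewrite count_T_cons. destruct x; [lia|]. destruct l; [discriminate | apply IH in H; lia].
Qed.

Lemma word_op_normal_form w m n : is_WT_pattern m n w -> has_normal_form m n 1%Z (fun g f => word_op g w f).
Proof.
  revert m n. induction w as [|x w IH]; intros m n [Hm [Hn Hl]]; [discriminate|].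
  destruct w as [|y w'].
  - simpl in Hl. subst x. unfold count_S, count_T in *. simpl in Hm, Hn. subst m n.
    exists (fun _ => 1%Z). split; [reflexivity|]. intros g f Hg Hf z Hz. unfold normal_comb, normal_word. simpl. ring.
  - specialize (IH (count_S (y :: w')) (count_T (y :: w')) ltac:(repeat split; exact Hl)).
    pose proof (last_true_count_T (y :: w') Hl) as Hc.
    rewrite count_S_cons in Hm. rewrite count_T_cons in Hn.
    destruct x; cbv beta iota in Hm, Hn; subst m n.
    + apply has_normal_form_Tg; [intros k Hk; apply Tg_normal_word; lia | exact IH].
    + apply has_normal_form_Sg, IH.
Qed.

Theorem proposition3p7 (m n : nat) (hn : (1 <= n)%nat) (w : list bool)
  (hw : is_WT_pattern m n w) :
  exists c : nat -> Z,
    forall g : C -> C, holo_disc g ->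
    forall f : C -> C, holo_disc f ->
    forall z : C, in_disc z ->
      word_op g w f z =
      Cplus (op_pow (Sg g) m (op_pow (Tg g) n f) z)
        (fold_right Cplus (RtoC 0)
          (map (fun j : nat =>
                  Cmult (RtoC (IZR (c j)))
                        (op_pow (Sg g) (m - j) (op_pow (Tg g) (n + j) f) z))
               (seq 1 m))).
Proof.
  destruct (word_op_normal_form w m n hw) as [e [He H]]. exists e.
  intros g Hg f Hf z Hz. rewrite (H g f Hg Hf z Hz).
  unfold normal_comb. rewrite csum_S_first, fold_right_seq_csum, He.
  unfold normal_word. rewrite Nat.sub_0_r, Nat.add_0_r. simpl IZR. rewrite Cmult_1_l. reflexivity.
Qed.
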